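(* Under the hypotheses of the preceding lemma (weight regularity, $\frac1N\sum_iw_i^4\to\mathbb E[W^4]<\infty$, $\beta=\beta_{c,N}={\rm asinh}(1/\nu_N)$, $\lambda=3/4$), for every $r\in\mathbb R$, \[ \lim_{N\to\infty}\int_{-\infty}^\infty e^{-NG_N(z/N^{1/4};r)}\,dz=\int_{-\infty}^\infty\exp\Big(zr\frac{\mathbb E[W]}{\sqrt{\mathbb E[W^2]}}-\frac1{12}\frac{\mathbb E[W^4]}{\mathbb E[W^2]^2}z^4\Big)dz. \]
   Context: Weights $w_i>0$, $W_N=w_{U_N}$ with $U_N$ uniform on $[N]$. Weight regularity: $W_N\to W$ in distribution, $\mathbb E[W_N^2]\to\mathbb E[W^2]<\infty$, $\mathbb E[W]>0$. $\nu_N=\mathbb E[W_N^2]/\mathbb E[W_N]$. $\alpha_N(\beta)=\sqrt{\sinh(\beta)/\mathbb E[W_N]}$ and $G_N(z;r)=\frac12z^2-\frac1N\sum_{i\in[N]}\log\cosh\big(\alpha_N(\beta)w_iz+r/N^\lambda\big)$. *)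

From Stdlib Require Import Reals Lra List.
Import ListNotations.
Open Scope R_scope.

Definition sumN (N : nat) (f : nat -> R) : R :=
  fold_right Rplus 0 (map f (seq 0 N)).

(* Weights form a (triangular) array: w N i is the weight of vertex i
   (i = 0..N-1, i.e. [N] reindexed) in the system of size N. *)

(* E[W_N^k] = (1/N) sum_{i in [N]} w_i^k, with W_N = w_{U_N}, U_N uniform on [N] *)
Definition emp_mom (w : nat -> nat -> R) (N k : nat) : R :=
  / INR N * sumN N (fun i => (w N i) ^ k).

Definition emp_cdf (w : nat -> nat -> R) (N : nat) (x : R) : R :=
  / INR N * sumN N (fun i => if Rle_dec (w N i) x then 1 else 0).

Definition is_cdf (F : R -> R) : Prop :=
  (forall x y, x <= y -> F x <= F y) /\
  (forall x eps, 0 < eps -> exists d, 0 < d /\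
       forall y, x <= y < x + d -> Rabs (F y - F x) < eps) /\
  (forall eps, 0 < eps -> exists M, forall x, x < - M -> Rabs (F x) < eps) /\
  (forall eps, 0 < eps -> exists M, forall x, M < x -> Rabs (F x - 1) < eps).

Definition improper_integral_0_inf (f : R -> R) (l : R) : Prop :=
  (forall b, 0 <= b -> inhabited (Riemann_integrable f 0 b)) /\
  (forall eps, 0 < eps -> exists M, forall b, M < b ->
     exists pr : Riemann_integrable f 0 b, Rabs (RiemannInt pr - l) < eps).

Definition improper_integral (f : R -> R) (l : R) : Prop :=
  (forall a b, a <= b -> inhabited (Riemann_integrable f a b)) /\
  (forall eps, 0 < eps -> exists M, forall a b, a < - M -> M < b ->
     exists pr : Riemann_integrable f a b, Rabs (RiemannInt pr - l) < eps).

(* For a nonnegative random variable W with distribution function F,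
   E[W^k] = \int_0^oo k x^(k-1) P(W > x) dx  (k >= 1);
   "moment_cdf F k m" says this expectation is finite and equals m. *)
Definition moment_cdf (F : R -> R) (k : nat) (m : R) : Prop :=
  improper_integral_0_inf (fun x => INR k * x ^ (k - 1) * (1 - F x)) m.

Definition nu (w : nat -> nat -> R) (N : nat) : R := emp_mom w N 2 / emp_mom w N 1.

Definition beta_c (w : nat -> nat -> R) (N : nat) : R := arcsinh (/ nu w N).

Definition alpha (w : nat -> nat -> R) (N : nat) (beta : R) : R :=
  sqrt (sinh beta / emp_mom w N 1).

Definition G (w : nat -> nat -> R) (N : nat) (beta lambda : R) (z r : R) : R :=
  z ^ 2 / 2 - / INR N * sumN N (fun i =>
     ln (cosh (alpha w N beta * w N i * z + r / Rpower (INR N) lambda))).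

From Stdlib Require Import Reals Lra Lia Psatz List Classical ClassicalEpsilon.
From Coquelicot Require Import Coquelicot.
Open Scope R_scope.
Set Bullet Behavior "Strict Subproofs".

(* At the critical inverse temperature [alpha_N(beta_c)^2 E[W_N^2] = 1], so after rescaling
   [z -> z / N^(1/4)] the expansion [ln cosh x = x^2/2 - x^4/12 + O(x^6)] makes the quadratic
   part of [-N G_N] cancel exactly.  What remains is
   [z r E[W_N] / sqrt(E[W_N^2]) - z^4 E[W_N^4] / (12 E[W_N^2]^2)], cross terms of order
   [N^(-1/2)], and a remainder controlled by the uniform integrability of [W_N^4].  That uniform
   integrability, and [E[W_N] -> E[W]], follow from convergence in distribution and of the fourth
   moments, by writing truncated moments as Riemann-Stieltjes sums over continuity points of [F].
   Hence the integrands converge locally uniformly.  Since a fixed fraction of the weights exceeds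
   some [c > 0], the bound [ln cosh x <= x^2/2 - min(x^4, x^2)/20] dominates all integrands by
   [D exp(-|z|)], and dominated convergence for improper Riemann integrals concludes. *)

Ltac solve_poly_derive := auto_derive; repeat split; try easy; try ring; try field.

Lemma sumN_0 f : sumN 0 f = 0.
Proof. reflexivity. Qed.

Lemma sumN_S N f : sumN (S N) f = sumN N f + f N.
Proof.
  unfold sumN. rewrite seq_S, map_app, fold_right_app. simpl.
  induction (map f (seq 0 N)) as [|x l IH]; simpl; [ring|]. rewrite IH. ring.
Qed.

Lemma sumN_ext N f g : (forall i, (i < N)%nat -> f i = g i) -> sumN N f = sumN N g.
Proof.
  induction N; intros H; [reflexivity|]. rewrite !sumN_S, IHN by (intros; apply H; lia).
  rewrite H by lia. reflexivity.
Qed.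

Lemma sumN_le N f g : (forall i, (i < N)%nat -> f i <= g i) -> sumN N f <= sumN N g.
Proof.
  induction N; intros H; [rewrite !sumN_0; lra|]. rewrite !sumN_S.
  pose proof (IHN ltac:(intros; apply H; lia)). pose proof (H N ltac:(lia)). lra.
Qed.

Lemma sumN_plus N f g : sumN N (fun i => f i + g i) = sumN N f + sumN N g.
Proof. induction N; [rewrite !sumN_0; simpl; ring|]. rewrite !sumN_S, IHN. ring. Qed.

Lemma sumN_scal N c f : sumN N (fun i => c * f i) = c * sumN N f.
Proof. induction N; [rewrite !sumN_0; simpl; ring|]. rewrite !sumN_S, IHN. ring. Qed.

Lemma sumN_const N c : sumN N (fun _ => c) = INR N * c.
Proof. induction N; [rewrite !sumN_0; simpl; ring|]. rewrite !sumN_S, IHN, S_INR. ring. Qed.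

Lemma sumN_nonneg N f : (forall i, (i < N)%nat -> 0 <= f i) -> 0 <= sumN N f.
Proof.
  intros H. replace 0 with (sumN N (fun _ => 0)) at 1 by (rewrite sumN_const; ring).
  apply sumN_le. auto.
Qed.

Lemma sumN_ge_term N f k : (k < N)%nat -> (forall i, (i < N)%nat -> 0 <= f i) -> f k <= sumN N f.
Proof.
  induction N; intros Hk H; [lia|]. rewrite sumN_S.
  destruct (Nat.eq_dec k N) as [->|Hne].
  - pose proof (sumN_nonneg N f ltac:(intros; apply H; lia)). lra.
  - pose proof (IHN ltac:(lia) ltac:(intros; apply H; lia)). pose proof (H N ltac:(lia)). lra.
Qed.

Lemma sumN_swap N m (a : nat -> nat -> R) :
  sumN N (fun i => sumN m (fun j => a i j)) = sumN m (fun j => sumN N (fun i => a i j)).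
Proof.
  induction N.
  - rewrite sumN_0. transitivity (sumN m (fun _ => 0)).
    + rewrite sumN_const. ring.
    + apply sumN_ext; reflexivity.
  - rewrite sumN_S, IHN, <- sumN_plus. apply sumN_ext. intros. rewrite sumN_S. reflexivity.
Qed.

Lemma sumN_telescope m (g : nat -> R) : sumN m (fun j => g j - g (S j)) = g 0%nat - g m.
Proof. induction m; [rewrite sumN_0; ring|]. rewrite sumN_S, IHm. ring. Qed.

Lemma sumN_quartic N (w : nat -> R) c0 c1 c2 c3 c4 :
  sumN N (fun i => c0 + c1 * w i + c2 * w i ^ 2 + c3 * w i ^ 3 + c4 * w i ^ 4)
  = INR N * c0 + c1 * sumN N w + c2 * sumN N (fun i => w i ^ 2)
    + c3 * sumN N (fun i => w i ^ 3) + c4 * sumN N (fun i => w i ^ 4).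
Proof. induction N; [rewrite !sumN_0; simpl; ring|]. rewrite !sumN_S, IHN, S_INR. ring. Qed.

Lemma Un_cv_sumN m (a : nat -> nat -> R) (l : nat -> R) :
  (forall j, (j < m)%nat -> Un_cv (a j) (l j)) ->
  Un_cv (fun N => sumN m (fun j => a j N)) (sumN m l).
Proof.
  induction m; intros H.
  - intros e He. exists 0%nat. intros. unfold R_dist. rewrite !sumN_0, Rminus_0_r, Rabs_R0. lra.
  - apply Un_cv_ext with (fun N => sumN m (fun j => a j N) + a m N).
    { intros; rewrite sumN_S; auto. }
    rewrite sumN_S. apply CV_plus; [apply IHm; intros|]; apply H; lia.
Qed.

Lemma INR_pos N : (1 <= N)%nat -> 0 < INR N.
Proof. intros; apply lt_0_INR; lia. Qed.

Lemma sumN_pow_emp_mom w N k : (1 <= N)%nat ->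
  sumN N (fun i => w N i ^ k) = INR N * emp_mom w N k.
Proof. intros HN. unfold emp_mom. pose proof (INR_pos N HN). field. lra. Qed.

Lemma emp_mom_pos w N k : (forall i, (i < N)%nat -> 0 < w N i) -> (1 <= N)%nat ->
  0 < emp_mom w N k.
Proof.
  intros Hp HN. unfold emp_mom. apply Rmult_lt_0_compat.
  { apply Rinv_0_lt_compat, INR_pos, HN. }
  destruct N; [lia|]. rewrite sumN_S.
  pose proof (sumN_nonneg N (fun i => w (S N) i ^ k)
    ltac:(intros; apply pow_le; left; apply Hp; lia)).
  pose proof (pow_lt (w (S N) N) k (Hp N ltac:(lia))). lra.
Qed.

Lemma emp_mom1_sq_le w N : (1 <= N)%nat -> emp_mom w N 1 ^ 2 <= emp_mom w N 2.
Proof.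
  intros HN. pose proof (INR_pos N HN).
  set (m := emp_mom w N 1).
  assert (Hvar : 0 <= sumN N (fun i => m^2 + (-2*m) * w N i + 1 * w N i ^ 2
                                         + 0 * w N i ^ 3 + 0 * w N i ^ 4)).
  { apply sumN_nonneg. intros. pose proof (Rle_0_sqr (m - w N i)); unfold Rsqr in *; nra. }
  rewrite sumN_quartic in Hvar.
  replace (sumN N (w N)) with (sumN N (fun i => w N i ^ 1)) in Hvar
    by (apply sumN_ext; intros; ring).
  rewrite !sumN_pow_emp_mom in Hvar by auto. fold m in Hvar.
  apply Rmult_le_reg_l with (INR N); nra.
Qed.

Lemma emp_mom3_le w N : (forall i, (i < N)%nat -> 0 < w N i) -> (1 <= N)%nat ->
  emp_mom w N 3 <= emp_mom w N 2 + emp_mom w N 4.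
Proof.
  intros Hp HN. pose proof (INR_pos N HN). unfold emp_mom.
  rewrite <- Rmult_plus_distr_l, <- sumN_plus. apply Rmult_le_compat_l.
  { left; apply Rinv_0_lt_compat; lra. }
  apply sumN_le. intros i Hi. pose proof (Hp i Hi). set (v := w N i) in *.
  destruct (Rle_dec v 1).
  - assert (v ^ 3 <= v ^ 2) by (simpl; nra). assert (0 <= v ^ 4) by (apply pow_le; lra). lra.
  - assert (v ^ 3 <= v ^ 4) by (pose proof (pow_le v 3 ltac:(lra)); simpl in *; nra).
    assert (0 <= v ^ 2) by (apply pow_le; lra). lra.
Qed.

(** * Bounds on [tanh] and [ln cosh] *)

Lemma le_of_derive_nonneg (g g' : R -> R) (a : R) :
  (forall x, a <= x -> is_derive g x (g' x)) ->
  (forall x, a <= x -> 0 <= g' x) ->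
  forall y, a <= y -> g a <= g y.
Proof.
  intros Hd Hp y Hy.
  destruct (Req_dec a y) as [<-|Hne]; [lra|].
  destruct (MVT_gen g a y g') as [c [Hc Heq]].
  - intros x Hx. apply Hd. rewrite Rmin_left in Hx; lra.
  - intros x Hx. apply continuity_pt_filterlim.
    apply (ex_derive_continuous g). exists (g' x). apply Hd.
    rewrite Rmin_left in Hx; lra.
  - rewrite Rmin_left in Hc by lra. rewrite Rmax_right in Hc by lra.
    assert (0 <= g' c * (y - a)) by (apply Rmult_le_pos; [apply Hp; lra | lra]).
    lra.
Qed.

Lemma pow4_nonneg x : 0 <= x ^ 4.
Proof. replace (x ^ 4) with ((x ^ 2) ^ 2) by ring. apply pow2_ge_0. Qed.

Lemma exp_monotone x y : x <= y -> exp x <= exp y.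
Proof. intros H. destruct (Req_dec x y) as [->|E]; [lra|]. left; apply exp_increasing; lra. Qed.

Lemma tanh_exp x : tanh x = (exp x - exp (-x)) / (exp x + exp (-x)).
Proof.
  unfold tanh, sinh, cosh. pose proof (exp_pos x). pose proof (exp_pos (-x)).
  field. lra.
Qed.

Lemma is_derive_lncosh x : is_derive (fun y => ln (cosh y)) x (tanh x).
Proof.
  unfold cosh. rewrite tanh_exp. pose proof (exp_pos x). pose proof (exp_pos (-x)).
  auto_derive; [lra|field; lra].
Qed.

Lemma is_derive_tanh x : is_derive tanh x (1 - tanh x ^ 2).
Proof.
  apply is_derive_ext with (f := fun y => (exp y - exp (-y)) / (exp y + exp (-y))).
  { intros; rewrite tanh_exp; auto. }
  rewrite tanh_exp. pose proof (exp_pos x). pose proof (exp_pos (-x)).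
  auto_derive; [lra|field; lra].
Qed.

Lemma tanh_bound x : -1 < tanh x < 1.
Proof.
  rewrite tanh_exp. pose proof (exp_pos x). pose proof (exp_pos (-x)).
  split; [apply Rlt_div_r|apply Rlt_div_l]; lra.
Qed.

Lemma tanh_nonneg x : 0 <= x -> 0 <= tanh x.
Proof.
  intros H. rewrite tanh_exp. pose proof (exp_pos (-x)).
  pose proof (exp_monotone (-x) x ltac:(lra)).
  apply Rdiv_le_0_compat; lra.
Qed.

Lemma tanh_opp x : tanh (- x) = - tanh x.
Proof.
  rewrite !tanh_exp, Ropp_involutive.
  pose proof (exp_pos x). pose proof (exp_pos (-x)). field. lra.
Qed.

Lemma tanh_0 : tanh 0 = 0.
Proof. unfold tanh. rewrite cosh_0. unfold sinh. rewrite Ropp_0. field. Qed.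

Lemma lncosh_0 : ln (cosh 0) = 0.
Proof. rewrite cosh_0. apply ln_1. Qed.

Lemma lncosh_opp x : ln (cosh (- x)) = ln (cosh x).
Proof. unfold cosh. rewrite Ropp_involutive, Rplus_comm. reflexivity. Qed.

Lemma is_derive_scal_tanh_plus (p p' : R -> R) (c : R) x :
  is_derive p x (p' x) -> is_derive (fun y => c * tanh y + p y) x (c * (1 - tanh x ^ 2) + p' x).
Proof.
  intros Hp. apply (is_derive_plus (fun y => c * tanh y) p); [|exact Hp].
  apply (is_derive_scal tanh x c). apply is_derive_tanh.
Qed.

Lemma is_derive_scal_lncosh_plus (p p' : R -> R) (c : R) x :
  is_derive p x (p' x) -> is_derive (fun y => c * ln (cosh y) + p y) x (c * tanh x + p' x).
Proof.
  intros Hp. apply (is_derive_plus (fun y => c * ln (cosh y)) p); [|exact Hp].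
  apply (is_derive_scal (fun y => ln (cosh y)) x c). apply is_derive_lncosh.
Qed.

(* Each of the following Taylor bounds on [0, +oo) follows from the previous one:
   the difference of the two sides vanishes at 0 and has a nonnegative derivative. *)

Lemma tanh_le x : 0 <= x -> tanh x <= x.
Proof.
  intros Hx.
  cut ((-1) * tanh 0 + 0 <= (-1) * tanh x + x). { rewrite tanh_0. lra. }
  apply (le_of_derive_nonneg (fun y => (-1) * tanh y + y)
           (fun y => (-1) * (1 - tanh y ^ 2) + 1) 0); auto.
  - intros y _. apply (is_derive_scal_tanh_plus (fun y => y) (fun _ => 1)). solve_poly_derive.
  - intros y _. nra.
Qed.

Lemma tanh_ge_cubic x : 0 <= x -> x - x^3/3 <= tanh x.
Proof.
  intros Hx.
  cut (1 * tanh 0 + (- 0 + 0^3/3) <= 1 * tanh x + (-x + x^3/3)). { rewrite tanh_0. lra. }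
  apply (le_of_derive_nonneg (fun y => 1 * tanh y + (- y + y^3/3))
           (fun y => 1 * (1 - tanh y ^ 2) + (-1 + y^2)) 0); auto.
  - intros y _. apply (is_derive_scal_tanh_plus (fun y => - y + y^3/3) (fun y => -1 + y^2)).
    solve_poly_derive.
  - intros y Hy. pose proof (tanh_le y Hy). pose proof (tanh_nonneg y Hy). nra.
Qed.

Lemma tanh_le_quintic x : 0 <= x -> tanh x <= x - x^3/3 + 2 * x^5 / 15.
Proof.
  intros Hx.
  cut ((-1) * tanh 0 + (0 - 0^3/3 + 2*0^5/15) <= (-1) * tanh x + (x - x^3/3 + 2*x^5/15)).
  { rewrite tanh_0. lra. }
  apply (le_of_derive_nonneg (fun y => (-1) * tanh y + (y - y^3/3 + 2*y^5/15))
           (fun y => (-1) * (1 - tanh y ^ 2) + (1 - y^2 + 2 * y^4/3)) 0); auto.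
  - intros y _. apply (is_derive_scal_tanh_plus (fun y => y - y^3/3 + 2*y^5/15)
                        (fun y => 1 - y^2 + 2*y^4/3)).
    solve_poly_derive.
  - intros y Hy. pose proof (tanh_ge_cubic y Hy).
    destruct (Rle_dec (y^2) (3/2)).
    + assert (0 <= y - y^3/3) by nra.
      assert ((y - y^3/3)^2 <= tanh y ^2) by (apply pow_incr; lra). nra.
    + assert (0 <= tanh y ^ 2) by nra. nra.
Qed.

Lemma lncosh_le_sextic x : 0 <= x -> ln (cosh x) <= x^2/2 - x^4/12 + x^6/45.
Proof.
  intros Hx.
  cut ((-1) * ln (cosh 0) + (0^2/2 - 0^4/12 + 0^6/45)
       <= (-1) * ln (cosh x) + (x^2/2 - x^4/12 + x^6/45)).
  { rewrite lncosh_0. lra. }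
  apply (le_of_derive_nonneg (fun y => (-1) * ln (cosh y) + (y^2/2 - y^4/12 + y^6/45))
           (fun y => (-1) * tanh y + (y - y^3/3 + 2*y^5/15)) 0); auto.
  - intros y _. apply (is_derive_scal_lncosh_plus (fun y => y^2/2 - y^4/12 + y^6/45)
                        (fun y => y - y^3/3 + 2*y^5/15)).
    solve_poly_derive.
  - intros y Hy. pose proof (tanh_le_quintic y Hy). lra.
Qed.

Lemma lncosh_ge_quartic x : 0 <= x -> x^2/2 - x^4/12 <= ln (cosh x).
Proof.
  intros Hx.
  cut (1 * ln (cosh 0) + (- (0^2/2 - 0^4/12)) <= 1 * ln (cosh x) + (- (x^2/2 - x^4/12))).
  { rewrite lncosh_0. lra. }
  apply (le_of_derive_nonneg (fun y => 1 * ln (cosh y) + (- (y^2/2 - y^4/12)))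
           (fun y => 1 * tanh y + (- (y - y^3/3))) 0); auto.
  - intros y _. apply (is_derive_scal_lncosh_plus (fun y => - (y^2/2 - y^4/12))
                        (fun y => - (y - y^3/3))).
    solve_poly_derive.
  - intros y Hy. pose proof (tanh_ge_cubic y Hy). lra.
Qed.

Lemma lncosh_le_sq x : 0 <= x -> ln (cosh x) <= x^2/2.
Proof.
  intros Hx.
  cut ((-1) * ln (cosh 0) + 0^2/2 <= (-1) * ln (cosh x) + x^2/2). { rewrite lncosh_0. lra. }
  apply (le_of_derive_nonneg (fun y => (-1) * ln (cosh y) + y^2/2)
           (fun y => (-1) * tanh y + y) 0); auto.
  - intros y _. apply (is_derive_scal_lncosh_plus (fun y => y^2/2) (fun y => y)). solve_poly_derive.
  - intros y Hy. pose proof (tanh_le y Hy). lra.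
Qed.

Lemma lncosh_le_linear x : 1 <= x -> ln (cosh x) <= ln (cosh 1) + (x - 1).
Proof.
  intros Hx.
  cut ((-1) * ln (cosh 1) + 1 <= (-1) * ln (cosh x) + x). { lra. }
  apply (le_of_derive_nonneg (fun y => (-1) * ln (cosh y) + y)
           (fun y => (-1) * tanh y + 1) 1); auto.
  - intros y _. apply (is_derive_scal_lncosh_plus (fun y => y) (fun _ => 1)). solve_poly_derive.
  - intros y _. pose proof (tanh_bound y). lra.
Qed.

Definition lncosh_rem (x : R) := ln (cosh x) - (x^2/2 - x^4/12).

Lemma lncosh_rem_bounds x :
  0 <= lncosh_rem x /\ lncosh_rem x <= x^4/12 /\ lncosh_rem x <= x^6/45.
Proof.
  unfold lncosh_rem.
  assert (Hnonneg : forall y, 0 <= y -> 0 <= ln (cosh y) - (y^2/2 - y^4/12) /\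
            ln (cosh y) - (y^2/2 - y^4/12) <= y^4/12 /\ ln (cosh y) - (y^2/2 - y^4/12) <= y^6/45).
  { intros y Hy. pose proof (lncosh_le_sextic y Hy). pose proof (lncosh_ge_quartic y Hy).
    pose proof (lncosh_le_sq y Hy). lra. }
  destruct (Rle_dec 0 x) as [Hx|Hx]; [auto|].
  rewrite <- lncosh_opp.
  replace (x^2) with ((-x)^2) by ring. replace (x^4) with ((-x)^4) by ring.
  replace (x^6) with ((-x)^6) by ring. apply Hnonneg. lra.
Qed.

Definition min_quartic_sq (x : R) : R := Rmin (x ^ 4) (x ^ 2).

Lemma lncosh_le_sq_sub_min x : ln (cosh x) <= x^2/2 - / 20 * min_quartic_sq x.
Proof.
  unfold min_quartic_sq.
  assert (Hnonneg : forall y, 0 <= y -> ln (cosh y) <= y^2/2 - / 20 * Rmin (y^4) (y^2)).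
  { intros y Hy. destruct (Rle_dec y 1).
    - pose proof (lncosh_le_sextic y Hy).
      assert (y^2 <= 1) by nra.
      assert (y^4 <= y^2) by nra. rewrite Rmin_left by lra.
      assert (y^6 <= y^4) by nra. nra.
    - pose proof (lncosh_le_linear y ltac:(lra)). pose proof (lncosh_le_sextic 1 ltac:(lra)).
      assert (1 <= y^2) by nra. assert (y^2 <= y^4) by nra. rewrite Rmin_right by lra.
      pose proof (Rle_0_sqr (y - 10/9)). unfold Rsqr in *. simpl in *. nra. }
  destruct (Rle_dec 0 x) as [Hx|Hx]; [auto|].
  rewrite <- lncosh_opp.
  replace (x^2) with ((-x)^2) by ring. replace (x^4) with ((-x)^4) by ring.
  apply Hnonneg. lra.
Qed.

Lemma Rabs_tanh_le y : Rabs (tanh y) <= Rabs y.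
Proof.
  destruct (Rle_dec 0 y) as [Hy|Hy].
  - pose proof (tanh_le y Hy). pose proof (tanh_nonneg y Hy). rewrite !Rabs_right; lra.
  - pose proof (tanh_le (- y) ltac:(lra)). pose proof (tanh_nonneg (- y) ltac:(lra)).
    rewrite tanh_opp in *. rewrite (Rabs_left1 (tanh y)), (Rabs_left y) by lra. lra.
Qed.

Lemma tanh_lipschitz a b : Rabs (tanh b - tanh a) <= Rabs (b - a).
Proof.
  destruct (MVT_abs tanh (fun y => 1 - tanh y ^ 2) a b) as [c [Hc _]].
  { intros c _. apply is_derive_Reals. apply is_derive_tanh. }
  rewrite Hc. pose proof (tanh_bound c).
  assert (Rabs (1 - tanh c ^ 2) <= 1) by (apply Rabs_le; nra).
  pose proof (Rabs_pos (b - a)). nra.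
Qed.

Lemma lncosh_add_le a b : ln (cosh (a + b)) <= ln (cosh a) + b * tanh a + b^2.
Proof.
  destruct (MVT_gen (fun y => ln (cosh y)) a (a + b) tanh) as [c [Hc Heq]].
  { intros; apply is_derive_lncosh. }
  { intros x _. apply continuity_pt_filterlim.
    apply (ex_derive_continuous (fun y => ln (cosh y))). eexists; apply is_derive_lncosh. }
  replace (a + b - a) with b in Heq by ring.
  pose proof (tanh_lipschitz a c).
  assert (Rabs (c - a) <= Rabs b).
  { unfold Rmin, Rmax in Hc. destruct (Rle_dec a (a+b)).
    - rewrite !Rabs_right by lra. lra.
    - rewrite (Rabs_left b) by lra. apply Rabs_le. lra. }
  assert (b * (tanh c - tanh a) <= b^2).
  { apply Rle_trans with (Rabs (b * (tanh c - tanh a))); [apply Rle_abs|].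
    rewrite Rabs_mult, <- (pow2_abs b). simpl. rewrite Rmult_1_r.
    apply Rmult_le_compat_l; [apply Rabs_pos|lra]. }
  nra.
Qed.

(** * Continuity points of a distribution function *)

Lemma cdf_le_1 F : is_cdf F -> forall x, F x <= 1.
Proof.
  intros [Hm [_ [_ Hp]]] x.
  apply Rnot_lt_le; intros Hlt.
  destruct (Hp (F x - 1) ltac:(lra)) as [M HM].
  set (y := Rmax x (M + 1)).
  assert (M < y) by (unfold y; pose proof (Rmax_r x (M+1)); lra).
  assert (x <= y) by apply Rmax_l.
  specialize (HM y H). pose proof (Hm _ _ H0). apply Rabs_def2 in HM. lra.
Qed.

Lemma cdf_ge_0 F : is_cdf F -> forall x, 0 <= F x.
Proof.
  intros [Hm [_ [Hn _]]] x.
  apply Rnot_lt_le; intros Hlt.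
  destruct (Hn (- F x) ltac:(lra)) as [M HM].
  set (y := Rmin x (- M - 1)).
  assert (y < - M) by (unfold y; pose proof (Rmin_r x (-M-1)); lra).
  assert (y <= x) by apply Rmin_l.
  specialize (HM y H). pose proof (Hm _ _ H0). apply Rabs_def2 in HM. lra.
Qed.

Lemma continuity_pt_monotone_squeeze F x :
  (forall u v, u <= v -> F u <= F v) ->
  (forall eps, 0 < eps -> exists c d, c < x < d /\ F d - F c < eps) ->
  continuity_pt F x.
Proof.
  intros Hm H. unfold continuity_pt, continue_in, limit1_in, limit_in.
  intros eps Heps. destruct (H eps Heps) as [c [d [[Hc Hd] HF]]].
  exists (Rmin (x - c) (d - x)). split.
  - apply Rmin_pos; lra.
  - intros y [[_ _] Hy]. simpl in *. unfold R_dist in *.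
    assert (Hy1 : Rabs (y - x) < x - c) by (eapply Rlt_le_trans; [exact Hy| apply Rmin_l]).
    assert (Hy2 : Rabs (y - x) < d - x) by (eapply Rlt_le_trans; [exact Hy| apply Rmin_r]).
    apply Rabs_def2 in Hy1. apply Rabs_def2 in Hy2.
    pose proof (Hm c y ltac:(lra)). pose proof (Hm y d ltac:(lra)).
    pose proof (Hm c x ltac:(lra)). pose proof (Hm x d ltac:(lra)).
    apply Rabs_def1; lra.
Qed.

(* Nested intervals strictly inside each other: of the two middle halves of the current
   interval, keep the one on which [F] increases less, so that the increase of [F] at least
   halves at each step; their common point is then a continuity point of [F]. *)
Fixpoint cdf_nest (F : R -> R) (a b : R) (n : nat) : R * R :=
  match n with
  | O => (a, b)
  | S n => let (c, d) := cdf_nest F a b n in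
           let p1 := c + (d - c) / 4 in
           let p2 := c + (d - c) / 2 in
           let p3 := c + 3 * (d - c) / 4 in
           if Rle_dec (F p2 - F p1) (F p3 - F p2) then (p1, p2) else (p2, p3)
  end.

Lemma cdf_nest_spec F a b : a < b -> (forall u v, u <= v -> F u <= F v) ->
  forall n, fst (cdf_nest F a b n) < snd (cdf_nest F a b n) /\
    fst (cdf_nest F a b n) < fst (cdf_nest F a b (S n)) /\
    snd (cdf_nest F a b (S n)) < snd (cdf_nest F a b n) /\
    F (snd (cdf_nest F a b n)) - F (fst (cdf_nest F a b n)) <= (F b - F a) / 2 ^ n.
Proof.
  intros Hab Hm.
  assert (Hstep : forall c d, c < d -> let (c', d') :=
           (let p1 := c + (d - c) / 4 in
           let p2 := c + (d - c) / 2 in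
           let p3 := c + 3 * (d - c) / 4 in
           if Rle_dec (F p2 - F p1) (F p3 - F p2) then (p1, p2) else (p2, p3)) in
           c < c' /\ c' < d' /\ d' < d /\ F d' - F c' <= (F d - F c) / 2).
  { intros c d Hcd. simpl.
    pose proof (Hm c (c + (d-c)/4) ltac:(lra)).
    pose proof (Hm (c + 3*(d-c)/4) d ltac:(lra)).
    destruct (Rle_dec _ _); repeat split; try lra. }
  induction n.
  - simpl. pose proof (Hstep a b Hab). destruct (Rle_dec _ _); simpl in *; lra.
  - destruct IHn as [H1 [H2 [H3 H4]]].
    simpl in H2, H3 |- *. destruct (cdf_nest F a b n) as [c d] eqn:E. simpl in *.
    pose proof (Hstep c d H1) as Hs. simpl in Hs.
    destruct (Rle_dec (F (c + (d - c) / 2) - F (c + (d - c) / 4))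
                  (F (c + 3 * (d - c) / 4) - F (c + (d - c) / 2))); simpl in *;
      pose proof (Hstep _ _ (proj1 (proj2 Hs))) as Hs2; simpl in Hs2;
      destruct (Rle_dec _ _); simpl in *; repeat split; try lra;
      apply Rle_trans with ((F d - F c)/2); try lra;
      apply Rle_trans with ((F b - F a)/2^n/2); try lra;
      replace ((F b - F a) / 2^n / 2) with ((F b - F a) / (2 * 2^n))
        by (field; apply pow_nonzero; lra); lra.
Qed.

Lemma cdf_nest_monotone F a b : a < b -> (forall u v, u <= v -> F u <= F v) ->
  forall n m, (n <= m)%nat ->
    fst (cdf_nest F a b n) <= fst (cdf_nest F a b m) /\
    snd (cdf_nest F a b m) <= snd (cdf_nest F a b n).
Proof.
  intros Hab Hm n m Hnm. induction Hnm. lra.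
  pose proof (cdf_nest_spec F a b Hab Hm m). lra.
Qed.

Lemma div_pow2_lt e : 0 < e -> forall C, exists n, C / 2 ^ n < e.
Proof.
  intros He C.
  destruct (pow_lt_1_zero (/2) ltac:(rewrite Rabs_right; lra) (e / (Rabs C + 1))) as [n Hn].
  { apply Rdiv_lt_0_compat; [lra|pose proof (Rabs_pos C); lra]. }
  exists n. specialize (Hn n (le_n n)).
  rewrite Rabs_right in Hn by (apply Rle_ge, pow_le; lra).
  rewrite pow_inv in Hn.
  assert (0 < 2 ^ n) by (apply pow_lt; lra).
  pose proof (Rabs_pos C). pose proof (Rle_abs C).
  apply Rmult_lt_compat_l with (r := Rabs C + 1) in Hn; [|lra].
  replace ((Rabs C + 1) * (e / (Rabs C + 1))) with e in Hn by (field; lra).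
  unfold Rdiv. apply Rle_lt_trans with ((Rabs C + 1) * / 2 ^ n); [|lra].
  apply Rmult_le_compat_r. left; apply Rinv_0_lt_compat; lra. lra.
Qed.

Lemma cdf_continuity_point_between F a b : is_cdf F -> a < b ->
  exists x, a < x < b /\ continuity_pt F x.
Proof.
  intros HF Hab. destruct HF as [Hm HF'].
  set (E := fun y => exists n, y = fst (cdf_nest F a b n)).
  assert (Hb : bound E).
  { exists b. intros y [n ->]. pose proof (cdf_nest_monotone F a b Hab Hm 0 n ltac:(lia)).
    pose proof (cdf_nest_spec F a b Hab Hm n). simpl in *. lra. }
  assert (Hne : exists y, E y) by (exists a; exists 0%nat; reflexivity).
  destruct (completeness E Hb Hne) as [x [Hub Hlub]].
  assert (Hin : forall n, fst (cdf_nest F a b n) < x < snd (cdf_nest F a b n)).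
  { intros n. pose proof (cdf_nest_spec F a b Hab Hm n) as [H1 [H2 [H3 H4]]]. split.
    - apply Rlt_le_trans with (fst (cdf_nest F a b (S n))); auto. apply Hub. exists (S n); auto.
    - apply Rle_lt_trans with (snd (cdf_nest F a b (S n))); auto. apply Hlub.
      intros y [k ->]. destruct (Nat.le_ge_cases k (S n)) as [l|g].
      + pose proof (cdf_nest_monotone F a b Hab Hm k (S n) l).
        pose proof (cdf_nest_spec F a b Hab Hm (S n)). lra.
      + pose proof (cdf_nest_monotone F a b Hab Hm (S n) k g).
        pose proof (cdf_nest_spec F a b Hab Hm k). lra. }
  exists x. split.
  - pose proof (Hin 1%nat). pose proof (cdf_nest_spec F a b Hab Hm 0). simpl in *. lra.
  - apply continuity_pt_monotone_squeeze; auto. intros eps Heps.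
    destruct (div_pow2_lt eps Heps (F b - F a)) as [n Hn].
    exists (fst (cdf_nest F a b n)), (snd (cdf_nest F a b n)). split; auto.
    pose proof (cdf_nest_spec F a b Hab Hm n). lra.
Qed.

Lemma cdf_continuity_partition F T0 eta : is_cdf F -> 0 <= T0 -> 0 < eta ->
  exists (m : nat) (t : nat -> R), t 0%nat = 0 /\
    (forall j, (j < m)%nat -> t j < t (S j) /\ t (S j) <= t j + eta) /\
    (forall j, (1 <= j <= m)%nat -> continuity_pt F (t j)) /\
    T0 <= t m <= T0 + eta.
Proof.
  intros HF HT Heta. set (h := eta / 2).
  assert (Hh : 0 < h) by (unfold h; lra).
  assert (Hc : forall j : nat, exists x, (INR j - 1/2) * h < x < INR j * h /\ continuity_pt F x).
  { intros j.
    destruct (cdf_continuity_point_between F ((INR j - 1/2) * h) (INR j * h) HF) as [x Hx].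
    nra. exists x; auto. }
  set (tc := fun j => proj1_sig (constructive_indefinite_description _ (Hc j))).
  assert (Htc : forall j, (INR j - 1/2) * h < tc j < INR j * h /\ continuity_pt F (tc j)).
  { intros j. unfold tc. destruct (constructive_indefinite_description _ _). auto. }
  set (t := fun j : nat => match j with O => 0 | _ => tc j end).
  destruct (nfloor_ex (T0 / h)) as [n Hn]. { apply Rdiv_le_0_compat; lra. }
  assert (HT0 : INR n * h <= T0 < INR n * h + h).
  { destruct Hn as [H1 H2]. assert (E : T0 = (T0/h)*h) by (field; lra).
    rewrite E. split; nra. }
  exists (S (S n)), t. split; [reflexivity|]. split; [|split].
  - intros j Hj. destruct j.
    + simpl. pose proof (Htc 1%nat). simpl in H. unfold h in *. lra.
    + change (t (S (S j))) with (tc (S (S j))). change (t (S j)) with (tc (S j)).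
      pose proof (Htc (S j)). pose proof (Htc (S (S j))).
      rewrite S_INR in H0. unfold h in *. lra.
  - intros j Hj. destruct j; [lia|]. apply Htc.
  - change (t (S (S n))) with (tc (S (S n))). pose proof (Htc (S (S n))).
    rewrite !S_INR in H. unfold h in *. lra.
Qed.

(** * Convergence of empirical moments *)

Definition ind_gt (x c : R) : R := if Rle_dec x c then 0 else 1.

Lemma ind_gt_01 x c : 0 <= ind_gt x c <= 1.
Proof. unfold ind_gt; destruct (Rle_dec x c); lra. Qed.

Lemma one_sub_emp_cdf w N c : (1 <= N)%nat ->
  1 - emp_cdf w N c = / INR N * sumN N (fun i => ind_gt (w N i) c).
Proof.
  intros HN. unfold emp_cdf. pose proof (INR_pos N HN).
  replace (sumN N (fun i => ind_gt (w N i) c)) with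
    (sumN N (fun i => 1 + (-1) * (if Rle_dec (w N i) c then 1 else 0))).
  - rewrite sumN_plus, sumN_const, sumN_scal. field. lra.
  - apply sumN_ext. intros. unfold ind_gt. destruct (Rle_dec _ _); ring.
Qed.

Lemma increasing_seq_le (t : nat -> R) m :
  (forall j, (j < m)%nat -> t j < t (S j)) -> forall j k, (j <= k <= m)%nat -> t j <= t k.
Proof.
  intros Ht j k Hjk. destruct Hjk as [H1 H2]. induction H1. lra.
  pose proof (Ht m0 ltac:(lia)). specialize (IHle ltac:(lia)). lra.
Qed.

Lemma layer_cake_pointwise (phi : R -> R) (t : nat -> R) (eta : R) (x : R) m :
  0 <= eta ->
  (forall u v, u <= v -> phi u <= phi v) ->
  (forall j, (j < m)%nat -> t j < t (S j) /\ phi (t (S j)) - phi (t j) <= eta) ->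
  sumN m (fun j => (phi (t (S j)) - phi (t j)) * ind_gt x (t (S j)))
    <= phi (Rmax (t 0%nat) (Rmin x (t m))) - phi (t 0%nat) <=
  sumN m (fun j => (phi (t (S j)) - phi (t j)) * ind_gt x (t (S j))) + eta /\
  (t m < x -> phi (Rmax (t 0%nat) (Rmin x (t m))) - phi (t 0%nat) =
     sumN m (fun j => (phi (t (S j)) - phi (t j)) * ind_gt x (t (S j)))).
Proof.
  intros Heta Hphi. induction m; intros Ht.
  - rewrite sumN_0. rewrite Rmin_comm.
    destruct (Rle_dec (t 0%nat) x).
    + rewrite Rmin_left by lra. rewrite Rmax_left by lra. split; [lra|intros; ring].
    + rewrite Rmin_right by lra. rewrite Rmax_left by lra. split; [lra|intros; ring].
  - specialize (IHm ltac:(intros; apply Ht; lia)).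
    assert (H0m : t 0%nat <= t m)
      by (apply (increasing_seq_le t (S m)); [intros; apply Ht; lia| lia]).
    destruct (Ht m ltac:(lia)) as [Hm1 Hm2].
    rewrite sumN_S. unfold ind_gt in *.
    destruct (Rle_dec x (t m)).
    + rewrite (Rmin_left x (t (S m))) by lra. rewrite (Rmin_left x (t m)) in IHm by lra.
      destruct (Rle_dec x (t (S m))); [|lra].
      destruct IHm as [IH1 IH2]. split; [lra|intros; lra].
    + destruct IHm as [IH1 IH2]. specialize (IH2 ltac:(lra)).
      rewrite (Rmin_right x (t m)) in IH2 by lra. rewrite Rmax_right in IH2 by lra.
      destruct (Rle_dec x (t (S m))).
      * rewrite (Rmin_left x (t (S m))) by lra. rewrite Rmax_right by lra.
        pose proof (Hphi (t m) x ltac:(lra)). pose proof (Hphi x (t (S m)) ltac:(lra)).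
        split; [lra|intros; lra].
      * rewrite (Rmin_right x (t (S m))) by lra. rewrite Rmax_right by lra.
        split; [lra|intros; lra].
Qed.

Lemma is_RInt_scal_deriv_pow (k : nat) (c a b : R) :
  is_RInt (fun x => INR k * x ^ (k - 1) * c) a b (c * (b ^ k - a ^ k)).
Proof.
  replace (c * (b ^ k - a ^ k)) with (minus (c * b^k) (c * a^k))
    by (unfold minus, plus, opp; simpl; ring).
  apply (is_RInt_derive (fun x => c * x ^ k)).
  - intros x _. auto_derive; auto. rewrite Nat.sub_1_r. ring.
  - intros x _. apply (ex_derive_continuous (fun x => INR k * x ^ (k - 1) * c)). auto_derive; auto.
Qed.

Lemma RInt_scal_deriv_pow (k : nat) (c a b : R) :
  RInt (fun x => INR k * x ^ (k - 1) * c) a b = c * (b ^ k - a ^ k).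
Proof. apply is_RInt_unique, is_RInt_scal_deriv_pow. Qed.

Lemma ex_RInt_scal_deriv_pow (k : nat) (c a b : R) :
  ex_RInt (fun x => INR k * x ^ (k - 1) * c) a b.
Proof. eexists; apply is_RInt_scal_deriv_pow. Qed.

Lemma RInt_tail_piece_bounds (F : R -> R) (k : nat) a b :
  (forall u v, u <= v -> F u <= F v) -> 0 <= a <= b ->
  ex_RInt (fun x => INR k * x ^ (k - 1) * (1 - F x)) a b ->
  (b ^ k - a ^ k) * (1 - F b) <= RInt (fun x => INR k * x ^ (k - 1) * (1 - F x)) a b
  <= (b ^ k - a ^ k) * (1 - F a).
Proof.
  intros Hm Hab Hex. split.
  - rewrite Rmult_comm, <- RInt_scal_deriv_pow.
    apply RInt_le; try lra; auto. apply ex_RInt_scal_deriv_pow.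
    intros x Hx. apply Rmult_le_compat_l. apply Rmult_le_pos. apply pos_INR. apply pow_le; lra.
    pose proof (Hm x b ltac:(lra)); lra.
  - rewrite Rmult_comm, <- RInt_scal_deriv_pow.
    apply RInt_le; try lra; auto. apply ex_RInt_scal_deriv_pow.
    intros x Hx. apply Rmult_le_compat_l. apply Rmult_le_pos. apply pos_INR. apply pow_le; lra.
    pose proof (Hm a x ltac:(lra)); lra.
Qed.

Lemma RInt_tail_sandwich (F : R -> R) (k : nat) (t : nat -> R) m :
  (forall u v, u <= v -> F u <= F v) -> t 0%nat = 0 ->
  (forall j, (j < m)%nat -> t j < t (S j)) ->
  ex_RInt (fun x => INR k * x ^ (k - 1) * (1 - F x)) 0 (t m) ->
  sumN m (fun j => (t (S j) ^ k - t j ^ k) * (1 - F (t (S j))))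
    <= RInt (fun x => INR k * x ^ (k - 1) * (1 - F x)) 0 (t m) <=
  sumN m (fun j => (t (S j) ^ k - t j ^ k) * (1 - F (t j))).
Proof.
  intros Hm H0 Ht. induction m; intros Hex.
  - rewrite !sumN_0. rewrite H0. rewrite RInt_point. unfold zero; simpl. lra.
  - assert (H0m : 0 <= t m)
      by (rewrite <- H0; apply (increasing_seq_le t (S m)); [intros; apply Ht; lia| lia]).
    pose proof (Ht m ltac:(lia)).
    assert (Ex1 : ex_RInt (fun x => INR k * x ^ (k - 1) * (1 - F x)) 0 (t m))
      by (apply (@ex_RInt_Chasles_1 R_CompleteNormedModule _ 0 (t m) (t (S m))); [lra|auto]).
    assert (Ex2 : ex_RInt (fun x => INR k * x ^ (k - 1) * (1 - F x)) (t m) (t (S m)))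
      by (apply (@ex_RInt_Chasles_2 R_CompleteNormedModule _ 0 (t m) (t (S m))); [lra|auto]).
    rewrite <- (@RInt_Chasles R_CompleteNormedModule _ 0 (t m) (t (S m))) by auto.
    unfold plus; simpl. rewrite !sumN_S.
    specialize (IHm ltac:(intros; apply Ht; lia) Ex1).
    pose proof (RInt_tail_piece_bounds F k (t m) (t (S m)) Hm ltac:(lra) Ex2). lra.
Qed.

Lemma moment_cdf_RInt F k mo : moment_cdf F k mo ->
  (forall b, 0 <= b -> ex_RInt (fun x => INR k * x ^ (k - 1) * (1 - F x)) 0 b) /\
  (forall eps, 0 < eps -> exists M, forall b, M < b -> 0 <= b ->
     Rabs (RInt (fun x => INR k * x ^ (k - 1) * (1 - F x)) 0 b - mo) < eps).
Proof.
  intros [H1 H2]. split.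
  - intros b Hb. destruct (H1 b Hb) as [pr]. apply ex_RInt_Reals_1; auto.
  - intros eps Heps. destruct (H2 eps Heps) as [M HM]. exists M. intros b Hb Hb0.
    destruct (HM b Hb) as [pr Hpr]. rewrite (RInt_Reals _ _ _ pr). auto.
Qed.

Definition pos_part_pow (k : nat) (x : R) := Rmax 0 x ^ k.

Lemma pos_part_pow_mono k u v : u <= v -> pos_part_pow k u <= pos_part_pow k v.
Proof. intros H. unfold pos_part_pow. apply pow_incr. split. apply Rmax_l.
  unfold Rmax; destruct (Rle_dec 0 u), (Rle_dec 0 v); lra. Qed.

Lemma pos_part_pow_pos k x : 0 <= x -> pos_part_pow k x = x ^ k.
Proof. intros; unfold pos_part_pow; rewrite Rmax_right; auto. Qed.

Definition emp_trunc_mom (w : nat -> nat -> R) (N k : nat) (T : R) : R :=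
  / INR N * sumN N (fun i => Rmin (w N i) T ^ k).

Lemma trunc_pow_layer_bounds (t : nat -> R) m k eta x :
  (1 <= k)%nat -> t 0%nat = 0 -> 0 <= eta -> 0 < x ->
  (forall j, (j < m)%nat -> t j < t (S j) /\ t (S j) ^ k - t j ^ k <= eta) ->
  sumN m (fun j => (t (S j) ^ k - t j ^ k) * ind_gt x (t (S j))) <= Rmin x (t m) ^ k <=
  sumN m (fun j => (t (S j) ^ k - t j ^ k) * ind_gt x (t (S j))) + eta.
Proof.
  intros Hk H0 Heta Hx Ht.
  assert (Htp : forall j, (j <= m)%nat -> 0 <= t j).
  { intros j Hj. rewrite <- H0. apply (increasing_seq_le t m); [intros; apply Ht; auto|lia]. }
  assert (Hphi : forall j, (j <= m)%nat -> pos_part_pow k (t j) = t j ^ k)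
    by (intros; apply pos_part_pow_pos, Htp; auto).
  pose proof (layer_cake_pointwise (pos_part_pow k) t eta x m Heta (pos_part_pow_mono k)) as HL.
  assert (E : sumN m (fun j => (pos_part_pow k (t (S j)) - pos_part_pow k (t j)) * ind_gt x (t (S j)))
            = sumN m (fun j => (t (S j) ^ k - t j ^ k) * ind_gt x (t (S j)))).
  { apply sumN_ext; intros. rewrite !Hphi by lia. reflexivity. }
  rewrite E, Hphi, H0, pow_i, Rminus_0_r in HL by lia.
  pose proof (Htp m (le_n m)).
  rewrite Rmax_right, pos_part_pow_pos in HL by (apply Rmin_glb; lra).
  apply HL. intros j Hj. rewrite !Hphi by lia. apply Ht; auto.
Qed.

Lemma emp_trunc_mom_layer w N (t : nat -> R) m k eta :
  (1 <= N)%nat -> (1 <= k)%nat -> t 0%nat = 0 ->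
  (forall j, (j < m)%nat -> t j < t (S j) /\ t (S j) ^ k - t j ^ k <= eta) -> 0 <= eta ->
  (forall i, (i < N)%nat -> 0 < w N i) ->
  sumN m (fun j => (t (S j) ^ k - t j ^ k) * (1 - emp_cdf w N (t (S j))))
   <= emp_trunc_mom w N k (t m) <=
  sumN m (fun j => (t (S j) ^ k - t j ^ k) * (1 - emp_cdf w N (t (S j)))) + eta.
Proof.
  intros HN Hk H0 Ht Heta Hw. unfold emp_trunc_mom. pose proof (INR_pos N HN).
  set (layer := fun x => sumN m (fun j => (t (S j) ^ k - t j ^ k) * ind_gt x (t (S j)))).
  assert (HL : forall i, (i < N)%nat ->
            layer (w N i) <= Rmin (w N i) (t m) ^ k <= layer (w N i) + eta).
  { intros i Hi. apply trunc_pow_layer_bounds; auto. }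
  assert (Hsum : sumN m (fun j => (t (S j) ^ k - t j ^ k) * (1 - emp_cdf w N (t (S j))))
                 = / INR N * sumN N (fun i => layer (w N i))).
  { unfold layer. rewrite sumN_swap, <- sumN_scal. apply sumN_ext. intros j Hj.
    rewrite one_sub_emp_cdf by auto.
    rewrite (sumN_scal N (t (S j) ^ k - t j ^ k) (fun i => ind_gt (w N i) (t (S j)))). ring. }
  rewrite Hsum. split.
  - apply Rmult_le_compat_l; [left; apply Rinv_0_lt_compat; lra|].
    apply sumN_le. intros; apply HL; auto.
  - apply Rle_trans with (/ INR N * sumN N (fun i => layer (w N i) + eta)).
    + apply Rmult_le_compat_l; [left; apply Rinv_0_lt_compat; lra|].
      apply sumN_le. intros; apply HL; auto.
    + rewrite sumN_plus, sumN_const. right. field. lra.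
Qed.

Lemma Un_cv_const c : Un_cv (fun _ => c) c.
Proof. intros e He. exists 0%nat. intros. unfold R_dist. rewrite Rminus_diag_eq, Rabs_R0; auto. Qed.

Lemma pow_sub_pow_le k a b : 0 <= a <= b -> b ^ k - a ^ k <= INR k * b ^ (k - 1) * (b - a).
Proof.
  intros Hab. induction k.
  - simpl. lra.
  - replace (S k - 1)%nat with k by lia. rewrite S_INR. simpl.
    assert (a ^ k <= b ^ k) by (apply pow_incr; lra).
    destruct k.
    + simpl. lra.
    + replace (S k - 1)%nat with k in IHk by lia. simpl in IHk |- *.
      assert (0 <= a ^ k) by (apply pow_le; lra).
      assert (a * a ^ k <= b * b ^ k) by (apply Rmult_le_compat; try lra; apply pow_incr; lra).
      nra.
Qed.

Lemma cdf_continuity_partition_pow F k T0 delta : is_cdf F -> 0 <= T0 -> 0 < delta ->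
  exists (m : nat) (t : nat -> R), t 0%nat = 0 /\
    (forall j, (j < m)%nat -> t j < t (S j) /\ t (S j) ^ k - t j ^ k <= delta) /\
    (forall j, (1 <= j <= m)%nat -> continuity_pt F (t j)) /\
    T0 <= t m.
Proof.
  intros HF HT0 Hd.
  set (C := INR k * (T0 + 2) ^ (k - 1) + 1).
  assert (HC : 0 < C).
  { unfold C. pose proof (pos_INR k). assert (0 <= (T0 + 2) ^ (k - 1)) by (apply pow_le; lra).
    nra. }
  set (eta := Rmin 1 (delta / C)).
  assert (Heta : 0 < eta /\ eta <= 1 /\ eta * C <= delta).
  { unfold eta. split; [apply Rmin_pos; [lra|apply Rdiv_lt_0_compat; lra]|split; [apply Rmin_l|]].
    apply Rle_trans with (delta / C * C). apply Rmult_le_compat_r; [lra|apply Rmin_r].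
    right; field; lra. }
  destruct (cdf_continuity_partition F T0 eta HF HT0 ltac:(lra))
    as [m [t [Ht0 [Ht [Hc HTm]]]]].
  exists m, t. split; [auto|]. split; [|split; [auto|lra]].
  intros j Hj. destruct (Ht j Hj) as [Hlt Hmesh]. split; [auto|].
  assert (0 <= t j /\ t (S j) <= t m).
  { split; [rewrite <- Ht0|]; apply (increasing_seq_le t m);
      try (intros; apply Ht; auto); lia. }
  eapply Rle_trans; [apply pow_sub_pow_le; lra|].
  apply Rle_trans with (INR k * (T0 + 2) ^ (k - 1) * eta).
  - apply Rmult_le_compat; try lra.
    + apply Rmult_le_pos; [apply pos_INR|apply pow_le; lra].
    + apply Rmult_le_compat_l; [apply pos_INR|apply pow_incr; lra].
  - apply Rle_trans with (C * eta); [|lra]. unfold C. nra.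
Qed.

(* The truncated moment of [W_N] is a Riemann-Stieltjes sum of [k x^(k-1) (1 - F_N x)] over
   a partition by continuity points of [F]; weak convergence turns it into the corresponding
   sum for [F], which is close to the integral defining the moment. *)
Lemma emp_trunc_mom_cv w F k mo :
  (forall N i, (i < N)%nat -> 0 < w N i) -> is_cdf F ->
  (forall x, continuity_pt F x -> Un_cv (fun N => emp_cdf w N x) (F x)) ->
  moment_cdf F k mo -> (1 <= k)%nat ->
  forall eps, 0 < eps -> forall T0, 0 <= T0 -> exists T, T0 <= T /\
   exists N0, forall N, (N0 <= N)%nat -> (1 <= N)%nat ->
     Rabs (emp_trunc_mom w N k T - mo) <= eps.
Proof.
  intros Hpos HF Hdist HM Hk eps Heps T0 HT0.
  set (delta := eps / 3). assert (Hd : 0 < delta) by (unfold delta; lra).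
  destruct (moment_cdf_RInt F k mo HM) as [Hex Hlim].
  destruct (Hlim delta Hd) as [M HMb].
  destruct (cdf_continuity_partition_pow F k (Rmax T0 (M + 1)) delta HF
              ltac:(pose proof (Rmax_l T0 (M + 1)); lra) Hd)
    as [m [t [Ht0 [Ht [Hc HTm]]]]].
  pose proof (Rmax_l T0 (M + 1)). pose proof (Rmax_r T0 (M + 1)).
  exists (t m). split; [lra|].
  set (Lw := sumN m (fun j => (t (S j) ^ k - t j ^ k) * (1 - F (t (S j))))).
  assert (Hsand := RInt_tail_sandwich F k t m (proj1 HF) Ht0 (fun j Hj => proj1 (Ht j Hj))
                     (Hex (t m) ltac:(lra))).
  assert (HRI : Rabs (RInt (fun x => INR k * x ^ (k - 1) * (1 - F x)) 0 (t m) - mo) < delta)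
    by (apply HMb; lra).
  assert (Hup : sumN m (fun j => (t (S j) ^ k - t j ^ k) * (1 - F (t j))) <= Lw + delta).
  { apply Rle_trans with (Lw + delta * ((1 - F (t 0%nat)) - (1 - F (t m)))).
    - unfold Lw. rewrite <- (sumN_telescope m (fun j => 1 - F (t j))).
      rewrite <- sumN_scal, <- sumN_plus. apply sumN_le. intros j Hj.
      destruct (Ht j Hj). pose proof (proj1 HF (t j) (t (S j)) ltac:(lra)). nra.
    - pose proof (cdf_le_1 F HF (t m)). pose proof (cdf_ge_0 F HF (t 0%nat)).
      assert (0 <= delta * (1 - F (t m) + F (t 0%nat))) by (apply Rmult_le_pos; lra). lra. }
  assert (Hcv : Un_cv (fun N => sumN m (fun j => (t (S j) ^ k - t j ^ k)
                                                * (1 - emp_cdf w N (t (S j))))) Lw).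
  { apply (Un_cv_sumN m (fun j N => (t (S j) ^ k - t j ^ k) * (1 - emp_cdf w N (t (S j))))).
    intros j Hj. apply CV_mult; [apply Un_cv_const|].
    apply CV_minus; [apply Un_cv_const|]. apply Hdist, Hc. lia. }
  destruct (Hcv delta Hd) as [N0 HN0].
  exists N0. intros N HN HN1.
  pose proof (emp_trunc_mom_layer w N t m k delta HN1 Hk Ht0 Ht ltac:(lra) (Hpos N)) as HE.
  specialize (HN0 N HN). unfold R_dist in HN0.
  apply Rabs_def2 in HN0. apply Rabs_def2 in HRI.
  apply Rabs_le. unfold Lw, delta in *. lra.
Qed.

Definition emp_mom4_tail (w : nat -> nat -> R) (N : nat) (K : R) : R :=
  / INR N * sumN N (fun i => ind_gt (w N i) K * w N i ^ 4).

Lemma emp_mom4_tail_nonneg w N K : (forall i, (i < N)%nat -> 0 < w N i) -> (1 <= N)%nat ->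
  0 <= emp_mom4_tail w N K.
Proof.
  intros Hp HN. unfold emp_mom4_tail. apply Rmult_le_pos.
  - left; apply Rinv_0_lt_compat, INR_pos, HN.
  - apply sumN_nonneg. intros i Hi.
    apply Rmult_le_pos; [apply ind_gt_01|apply pow_le; left; apply Hp; auto].
Qed.

(* Uniform integrability of [W_N^4]: convergence of the fourth moments together with the
   convergence of the truncated fourth moments leaves no room for mass escaping to infinity. *)
Lemma emp_mom4_tail_small w F EW4 :
  (forall N i, (i < N)%nat -> 0 < w N i) -> is_cdf F ->
  (forall x, continuity_pt F x -> Un_cv (fun N => emp_cdf w N x) (F x)) ->
  moment_cdf F 4 EW4 -> Un_cv (fun N => emp_mom w N 4) EW4 ->
  forall eps, 0 < eps -> exists K, 0 < K /\
    exists N0, forall N, (N0 <= N)%nat -> (1 <= N)%nat -> emp_mom4_tail w N K <= eps.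
Proof.
  intros Hpos HF Hdist HM Hcv eps Heps.
  destruct (emp_trunc_mom_cv w F 4 EW4 Hpos HF Hdist HM ltac:(lia) (3 * eps / 8) ltac:(lra)
              1 ltac:(lra)) as [T [HT [N1 HN1]]].
  destruct (Hcv (eps/8) ltac:(lra)) as [N2 HN2].
  exists (2 * T). split; [lra|]. exists (max N1 N2). intros N HN HN1'.
  specialize (HN1 N ltac:(lia) HN1'). specialize (HN2 N ltac:(lia)).
  unfold R_dist in HN2. apply Rabs_def2 in HN2. apply Rabs_le_between in HN1.
  unfold emp_trunc_mom in HN1. pose proof (INR_pos N HN1').
  assert (Hpw : forall i, (i < N)%nat ->
            ind_gt (w N i) (2 * T) * w N i ^ 4 <= 16/15 * (w N i ^ 4 - Rmin (w N i) T ^ 4)).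
  { intros i Hi. pose proof (Hpos N i Hi). unfold ind_gt. destruct (Rle_dec (w N i) (2*T)).
    - assert (0 <= Rmin (w N i) T) by (apply Rmin_glb; lra).
      assert (Rmin (w N i) T ^ 4 <= w N i ^ 4) by (apply pow_incr; split; auto; apply Rmin_l).
      lra.
    - rewrite Rmin_right by lra.
      assert ((2 * T) ^ 4 <= w N i ^ 4) by (apply pow_incr; lra).
      lra. }
  unfold emp_mom4_tail.
  apply Rle_trans with (/ INR N * sumN N (fun i => 16/15 * (w N i ^ 4 - Rmin (w N i) T ^ 4))).
  { apply Rmult_le_compat_l; [left; apply Rinv_0_lt_compat; lra|]. apply sumN_le; auto. }
  rewrite sumN_scal.
  replace (sumN N (fun i => w N i ^ 4 - Rmin (w N i) T ^ 4)) with
    (sumN N (fun i => w N i ^ 4) + (-1) * sumN N (fun i => Rmin (w N i) T ^ 4)).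
  2:{ rewrite <- sumN_scal, <- sumN_plus. apply sumN_ext; intros; ring. }
  rewrite sumN_pow_emp_mom by auto.
  replace (/ INR N * (16 / 15 * (INR N * emp_mom w N 4
                                 + -1 * sumN N (fun i => Rmin (w N i) T ^ 4))))
    with (16/15 * (emp_mom w N 4 - / INR N * sumN N (fun i => Rmin (w N i) T ^ 4)))
    by (field; lra).
  lra.
Qed.

Lemma emp_mom1_cv w F EW EW4 :
  (forall N i, (i < N)%nat -> 0 < w N i) -> is_cdf F ->
  (forall x, continuity_pt F x -> Un_cv (fun N => emp_cdf w N x) (F x)) ->
  moment_cdf F 1 EW ->
  moment_cdf F 4 EW4 -> Un_cv (fun N => emp_mom w N 4) EW4 ->
  Un_cv (fun N => emp_mom w N 1) EW.
Proof.
  intros Hpos HF Hdist HM1 HM4 Hcv4 eps Heps.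
  destruct (emp_mom4_tail_small w F EW4 Hpos HF Hdist HM4 Hcv4 (eps/6) ltac:(lra))
    as [K [HK [N1 HN1]]].
  pose proof (Rmax_l K 1). pose proof (Rmax_r K 1).
  destruct (emp_trunc_mom_cv w F 1 EW Hpos HF Hdist HM1 ltac:(lia) (eps/2) ltac:(lra)
              (Rmax K 1) ltac:(lra)) as [T [HT [N2 HN2]]].
  exists (max 1 (max N1 N2)). intros N HN. unfold R_dist.
  specialize (HN1 N ltac:(lia) ltac:(lia)). specialize (HN2 N ltac:(lia) ltac:(lia)).
  apply Rabs_le_between in HN2. unfold emp_trunc_mom in HN2. unfold emp_mom4_tail in HN1.
  assert (HN1' : (1 <= N)%nat) by lia. pose proof (INR_pos N HN1').
  assert (Hpw : forall i, (i < N)%nat ->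
            0 <= w N i ^ 1 - Rmin (w N i) T ^ 1 <= ind_gt (w N i) K * w N i ^ 4).
  { intros i Hi. pose proof (Hpos N i Hi). unfold ind_gt. rewrite !pow_1.
    destruct (Rle_dec (w N i) T).
    - rewrite Rmin_left by lra. destruct (Rle_dec (w N i) K); [lra|].
      pose proof (pow_lt (w N i) 4 ltac:(lra)). lra.
    - rewrite Rmin_right by lra. destruct (Rle_dec (w N i) K); [lra|].
      assert (w N i <= w N i ^ 4).
      { assert (1 <= w N i ^ 3) by (apply pow_R1_Rle; lra). simpl in *. nra. }
      lra. }
  assert (Hd : emp_mom w N 1 = / INR N * sumN N (fun i => Rmin (w N i) T ^ 1)
      + / INR N * sumN N (fun i => w N i ^ 1 - Rmin (w N i) T ^ 1)).
  { unfold emp_mom. rewrite <- Rmult_plus_distr_l, <- sumN_plus.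
    f_equal. apply sumN_ext; intros; ring. }
  assert (0 <= / INR N * sumN N (fun i => w N i ^ 1 - Rmin (w N i) T ^ 1) <= eps/6).
  { split.
    - apply Rmult_le_pos; [left; apply Rinv_0_lt_compat; lra|].
      apply sumN_nonneg. intros; apply Hpw; auto.
    - eapply Rle_trans; [|exact HN1]. apply Rmult_le_compat_l; [left; apply Rinv_0_lt_compat; lra|].
      apply sumN_le. intros; apply Hpw; auto. }
  apply Rabs_def1; lra.
Qed.

Lemma emp_cdf_mass_above w F EW :
  (forall N i, (i < N)%nat -> 0 < w N i) -> is_cdf F ->
  (forall x, continuity_pt F x -> Un_cv (fun N => emp_cdf w N x) (F x)) ->
  moment_cdf F 1 EW -> 0 < EW ->
  exists c p, 0 < c /\ 0 < p /\ exists N0, forall N, (N0 <= N)%nat -> p <= 1 - emp_cdf w N c.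
Proof.
  intros Hpos HF Hdist HM HEW.
  (* If [F = 1] on [(0, +oo)], the first moment would vanish. *)
  assert (Hx : exists x, 0 < x /\ F x < 1).
  { apply NNPP. intros Hn.
    destruct (moment_cdf_RInt F 1 EW HM) as [_ Hl]. destruct (Hl (EW/2) ltac:(lra)) as [M HMb].
    set (b := Rmax 1 (M + 1)).
    pose proof (Rmax_l 1 (M+1)). pose proof (Rmax_r 1 (M+1)).
    assert (M < b /\ 0 < b) by (unfold b; lra).
    specialize (HMb b ltac:(lra) ltac:(lra)).
    rewrite (RInt_ext _ (fun _ => 0)) in HMb.
    - rewrite RInt_const in HMb. unfold scal in HMb; simpl in HMb. unfold mult in HMb; simpl in HMb.
      rewrite Rmult_0_r in HMb. apply Rabs_def2 in HMb. lra.
    - intros x Hx. rewrite Rmin_left in Hx by lra. rewrite Rmax_right in Hx by lra.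
      assert (HF1 : F x = 1).
      { pose proof (cdf_le_1 F HF x). apply Rle_antisym; auto. apply Rnot_lt_le. intros Hlt.
        apply Hn. exists x. split; lra. }
      change (INR 1 * x ^ (1 - 1) * (1 - F x) = 0). rewrite HF1. ring. }
  destruct Hx as [x [Hx0 Hx1]].
  destruct (cdf_continuity_point_between F 0 x HF Hx0) as [c [Hc Hcc]].
  pose proof (proj1 HF c x ltac:(lra)).
  exists c, ((1 - F c) / 2). split; [lra|]. split; [lra|].
  destruct (Hdist c Hcc ((1 - F c)/2) ltac:(lra)) as [N0 HN0].
  exists N0. intros N HN. specialize (HN0 N HN). unfold R_dist in HN0. apply Rabs_def2 in HN0. lra.
Qed.

(** * Improper integrals of exponentially dominated functions *)

Definition exp_dominated (f : R -> R) (D : R) : Prop :=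
  forall x, 0 <= f x <= D * exp (- Rabs x).

Definition cv_locally_uniformly (fn : nat -> R -> R) (f : R -> R) : Prop :=
  forall M eps, 0 < eps -> exists N0, forall N, (N0 <= N)%nat ->
    forall x, Rabs x <= M -> Rabs (fn N x - f x) <= eps.

Lemma exp_dominator_nonneg (f : R -> R) D : exp_dominated f D -> 0 <= D.
Proof. intros Hb. pose proof (Hb 0). pose proof (exp_pos (- Rabs 0)). nra. Qed.

Lemma ex_RInt_continuous_R (f : R -> R) a b : (forall x, continuous f x) -> ex_RInt f a b.
Proof. intros Hc. apply (@ex_RInt_continuous R_CompleteNormedModule). intros; apply Hc. Qed.

Lemma RInt_right_tail_bounds (f : R -> R) D M b : (forall x, continuous f x) ->
  exp_dominated f D -> 0 <= M <= b ->
  0 <= RInt f M b <= D * exp (- M).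
Proof.
  intros Hc Hb HM. split.
  - rewrite <- (RInt_point M (fun _ => 0)) at 1 .
    replace (RInt (fun _ : R => 0) M M) with (RInt (fun _ : R => 0) M b).
    2:{ rewrite !RInt_const. unfold scal; simpl; unfold mult; simpl; ring. }
    apply RInt_le; try lra. apply ex_RInt_const. apply ex_RInt_continuous_R; auto. intros; apply Hb.
  - apply Rle_trans with (RInt (fun x => D * exp (- x)) M b).
    + apply RInt_le; try lra. apply ex_RInt_continuous_R; auto.
      apply ex_RInt_continuous_R. intros.
      apply (ex_derive_continuous (fun x => D * exp (-x))). auto_derive; auto.
      intros x Hx. rewrite <- (Rabs_right x) at 2 by lra. apply Hb.
    + rewrite (is_RInt_unique _ _ _ (D * exp (- M) - D * exp (- b))).
      * pose proof (exp_pos (-b)). pose proof (exp_dominator_nonneg f D Hb). nra.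
      * replace (D * exp (- M) - D * exp (- b)) with (minus (- D * exp (- b)) (- D * exp (- M)))
          by (unfold minus, plus, opp; simpl; ring).
        apply (is_RInt_derive (fun x => - D * exp (- x))).
        -- intros x _. auto_derive; auto. ring.
        -- intros x _. apply (ex_derive_continuous (fun x => D * exp (-x))). auto_derive; auto.
Qed.

Lemma RInt_left_tail_bounds (f : R -> R) D M a : (forall x, continuous f x) ->
  exp_dominated f D -> 0 <= M -> a <= - M ->
  0 <= RInt f a (- M) <= D * exp (- M).
Proof.
  intros Hc Hb HM Ha. split.
  - replace 0 with (RInt (fun _ : R => 0) a (- M)).
    2:{ rewrite !RInt_const. unfold scal; simpl; unfold mult; simpl; ring. }
    apply RInt_le; try lra. apply ex_RInt_const. apply ex_RInt_continuous_R; auto. intros; apply Hb.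
  - apply Rle_trans with (RInt (fun x => D * exp x) a (- M)).
    + apply RInt_le; try lra. apply ex_RInt_continuous_R; auto.
      apply ex_RInt_continuous_R. intros.
      apply (ex_derive_continuous (fun x => D * exp x)). auto_derive; auto.
      intros x Hx. replace x with (- Rabs x) at 2 by (rewrite Rabs_left by lra; ring). apply Hb.
    + rewrite (is_RInt_unique _ _ _ (D * exp (- M) - D * exp a)).
      * pose proof (exp_pos a). pose proof (exp_dominator_nonneg f D Hb). nra.
      * replace (D * exp (- M) - D * exp a) with (minus (D * exp (- M)) (D * exp a))
          by (unfold minus, plus, opp; simpl; ring).
        apply (is_RInt_derive (fun x => D * exp x)).
        -- intros x _. auto_derive; auto. ring.
        -- intros x _. apply (ex_derive_continuous (fun x => D * exp x)). auto_derive; auto.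
Qed.

Lemma RInt_split3 (f : R -> R) a b M :
  (forall x, continuous f x) -> a <= - M -> - M <= M -> M <= b ->
  RInt f a b = RInt f a (- M) + RInt f (- M) M + RInt f M b.
Proof.
  intros Hc H1 H2 H3.
  rewrite <- (@RInt_Chasles R_CompleteNormedModule f a (- M) b)
    by (apply ex_RInt_continuous_R; auto).
  rewrite <- (@RInt_Chasles R_CompleteNormedModule f (- M) M b)
    by (apply ex_RInt_continuous_R; auto).
  unfold plus; simpl. ring.
Qed.

Lemma RInt_sub_core_bounds (f : R -> R) D M a b : (forall x, continuous f x) ->
  exp_dominated f D -> 0 <= M -> a <= - M -> M <= b ->
  0 <= RInt f a b - RInt f (- M) M <= 2 * D * exp (- M).
Proof.
  intros Hc Hb HM Ha Hbb. rewrite (RInt_split3 f a b M) by (auto; lra).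
  pose proof (RInt_left_tail_bounds f D M a Hc Hb HM Ha).
  pose proof (RInt_right_tail_bounds f D M b Hc Hb ltac:(lra)). lra.
Qed.

Lemma exp_neg_small D eps : 0 < eps ->
  exists M, 0 <= M /\ forall M', M <= M' -> 2 * Rabs D * exp (- M') < eps.
Proof.
  intros He. exists ((2 * Rabs D + 1) / eps). split.
  { apply Rdiv_le_0_compat; [pose proof (Rabs_pos D); lra|lra]. }
  intros M' HM'.
  pose proof (Rabs_pos D).
  assert (0 <= M') by (eapply Rle_trans; [|exact HM']; apply Rdiv_le_0_compat; lra).
  pose proof (exp_ineq1_le M').
  rewrite exp_Ropp. pose proof (Rabs_pos D). pose proof (exp_pos M').
  apply Rmult_lt_reg_r with (exp M'); auto. rewrite Rmult_assoc, Rinv_l by lra.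
  assert (eps * ((2 * Rabs D + 1) / eps) = 2 * Rabs D + 1) by (field; lra).
  assert (eps * ((2 * Rabs D + 1) / eps) <= eps * M') by (apply Rmult_le_compat_l; lra).
  nra.
Qed.

Lemma Un_cv_le_eventually (u : nat -> R) l c N0 :
  Un_cv u l -> (forall n, (N0 <= n)%nat -> u n <= c) -> l <= c.
Proof.
  intros Hu Hc. apply Rnot_lt_le. intros Hlt.
  destruct (Hu (l - c) ltac:(lra)) as [N HN]. specialize (HN (max N N0) ltac:(lia)).
  specialize (Hc (max N N0) ltac:(lia)). unfold R_dist in HN. apply Rabs_def2 in HN. lra.
Qed.

Lemma nat_ge_above (M : R) : exists n0 : nat, forall n, (n0 <= n)%nat -> M <= INR n.
Proof.
  destruct (Rle_dec M 0) as [HM|HM].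
  - exists 0%nat. intros n _. pose proof (pos_INR n). lra.
  - destruct (nfloor_ex M ltac:(lra)) as [k Hk]. exists (S k). intros n Hn.
    apply Rle_trans with (INR (S k)); [rewrite S_INR; lra|apply le_INR; auto].
Qed.

Lemma RInt_sym_cv (f : R -> R) D : (forall x, continuous f x) ->
  exp_dominated f D ->
  exists l, Un_cv (fun n => RInt f (- INR n) (INR n)) l.
Proof.
  intros Hc Hb. pose proof (exp_dominator_nonneg f D Hb) as HD.
  set (s := fun n : nat => RInt f (- INR n) (INR n)).
  assert (Hs : forall n m, (n <= m)%nat -> 0 <= s m - s n <= 2 * D * exp (- INR n)).
  { intros n m Hnm. unfold s. pose proof (le_INR n m Hnm). pose proof (pos_INR n).
    apply RInt_sub_core_bounds; auto; lra. }
  assert (Hcau : Cauchy_crit s).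
  2:{ destruct (Rcomplete.R_complete s Hcau) as [l Hl]. exists l. exact Hl. }
  intros eps Heps. destruct (exp_neg_small D eps Heps) as [M [HM0 HM]].
  destruct (nat_ge_above M) as [n0 Hn0].
  exists n0. intros n m Hn Hm. unfold Rdist.
  destruct (Nat.le_ge_cases n m) as [Hnm|Hnm].
  - pose proof (Hs n m Hnm). specialize (HM (INR n) (Hn0 n Hn)).
    rewrite Rabs_right in HM by lra. rewrite Rabs_minus_sym, Rabs_right by lra. lra.
  - pose proof (Hs m n Hnm). specialize (HM (INR m) (Hn0 m Hm)).
    rewrite Rabs_right in HM by lra. rewrite Rabs_right by lra. lra.
Qed.

Lemma improper_integral_exp_dominated (f : R -> R) D : (forall x, continuous f x) ->
  exp_dominated f D ->
  exists l, improper_integral f l /\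
   forall M a b, 0 <= M -> a <= - M -> M <= b -> Rabs (RInt f a b - l) <= 2 * D * exp (- M).
Proof.
  intros Hc Hb. pose proof (exp_dominator_nonneg f D Hb) as HD.
  destruct (RInt_sym_cv f D Hc Hb) as [l Hl].
  assert (Hkey : forall M a b, 0 <= M -> a <= - M -> M <= b ->
                   Rabs (RInt f a b - l) <= 2 * D * exp (- M)).
  { intros M a b HM Ha Hbb.
    destruct (nat_ge_above M) as [n0 Hn0].
    assert (Hcore : forall n, (n0 <= n)%nat ->
              0 <= RInt f (- INR n) (INR n) - RInt f (- M) M <= 2 * D * exp (- M)).
    { intros n Hn. pose proof (Hn0 n Hn). apply RInt_sub_core_bounds; auto; lra. }
    assert (H1 : 0 <= l - RInt f (- M) M).
    { cut (- l <= - RInt f (- M) M); [lra|].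
      apply (Un_cv_le_eventually (fun n => - RInt f (- INR n) (INR n)) (- l) _ n0).
      - apply CV_opp; auto.
      - intros n Hn. pose proof (Hcore n Hn). lra. }
    assert (H2 : l - RInt f (- M) M <= 2 * D * exp (- M)).
    { apply (Un_cv_le_eventually (fun n => RInt f (- INR n) (INR n) - RInt f (- M) M) _ _ n0).
      - apply CV_minus; auto. apply Un_cv_const.
      - intros n Hn. pose proof (Hcore n Hn). lra. }
    pose proof (RInt_sub_core_bounds f D M a b Hc Hb HM Ha Hbb).
    apply Rabs_le. lra. }
  exists l. split; auto. split.
  - intros a b Hab. constructor. apply ex_RInt_Reals_0. apply ex_RInt_continuous_R; auto.
  - intros eps Heps. destruct (exp_neg_small D eps Heps) as [M [HM0 HM]].
    exists M. intros a b Ha Hbb.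
    exists (ex_RInt_Reals_0 f a b (ex_RInt_continuous_R f a b Hc)).
    rewrite <- RInt_Reals. eapply Rle_lt_trans; [apply (Hkey M a b HM0); lra|].
    specialize (HM M (Rle_refl M)). rewrite Rabs_right in HM by lra. lra.
Qed.

Lemma improper_integral_unique (f : R -> R) l1 l2 :
  improper_integral f l1 -> improper_integral f l2 -> l1 = l2.
Proof.
  assert (Hlt : forall a b, improper_integral f a -> improper_integral f b -> ~ b < a).
  { intros a b [_ Ha] [_ Hb] Hba.
    destruct (Ha ((a - b)/2) ltac:(lra)) as [Ma HMa].
    destruct (Hb ((a - b)/2) ltac:(lra)) as [Mb HMb].
    set (M := Rmax (Rabs Ma) (Rabs Mb) + 1).
    pose proof (Rmax_l (Rabs Ma) (Rabs Mb)). pose proof (Rmax_r (Rabs Ma) (Rabs Mb)).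
    pose proof (Rle_abs Ma). pose proof (Rle_abs Mb).
    destruct (HMa (-M) M ltac:(unfold M; lra) ltac:(unfold M; lra)) as [pa Hpa].
    destruct (HMb (-M) M ltac:(unfold M; lra) ltac:(unfold M; lra)) as [pb Hpb].
    rewrite <- RInt_Reals in Hpa, Hpb. apply Rabs_def2 in Hpa. apply Rabs_def2 in Hpb. lra. }
  intros H1 H2. apply Rle_antisym; apply Rnot_lt_le; apply Hlt; auto.
Qed.

Lemma improper_integral_core_approx (f : R -> R) D l : (forall x, continuous f x) ->
  exp_dominated f D -> improper_integral f l ->
  forall M, 0 <= M -> Rabs (RInt f (- M) M - l) <= 2 * D * exp (- M).
Proof.
  intros Hc Hb Hl M HM. destruct (improper_integral_exp_dominated f D Hc Hb) as [l' [Hl' Ht]].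
  rewrite (improper_integral_unique f l l') by auto. apply Ht; lra.
Qed.
Lemma exp_dominated_limit (fn : nat -> R -> R) (f : R -> R) D N1 :
  cv_locally_uniformly fn f -> (forall N, (N1 <= N)%nat -> exp_dominated (fn N) D) ->
  exp_dominated f D.
Proof.
  intros Hloc Hdom x.
  assert (Hclose : forall eps, 0 < eps -> exists N, (N1 <= N)%nat /\ Rabs (fn N x - f x) <= eps).
  { intros eps Heps. destruct (Hloc (Rabs x) eps Heps) as [N0 HN0].
    exists (max N0 N1). split; [lia|]. apply HN0; [lia|lra]. }
  split; apply Rnot_lt_le; intros Hlt.
  - destruct (Hclose (- f x / 2) ltac:(lra)) as [N [HN Hx]].
    pose proof (Hdom N HN x). apply Rabs_le_between in Hx. lra.
  - destruct (Hclose ((f x - D * exp (- Rabs x)) / 2) ltac:(lra)) as [N [HN Hx]].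
    pose proof (Hdom N HN x). apply Rabs_le_between in Hx. lra.
Qed.

(* Dominated convergence for improper Riemann integrals: the common exponential bound makes
   the tails uniformly small, and on the compact core convergence is uniform. *)
Lemma improper_integral_dominated_cv (fn : nat -> R -> R) (f : R -> R) D N1 (I : nat -> R) Il :
  (forall N, (N1 <= N)%nat -> forall x, continuous (fn N) x) -> (forall x, continuous f x) ->
  (forall N, (N1 <= N)%nat -> exp_dominated (fn N) D) -> exp_dominated f D ->
  cv_locally_uniformly fn f ->
  (forall N, (N1 <= N)%nat -> improper_integral (fn N) (I N)) -> improper_integral f Il ->
  Un_cv I Il.
Proof.
  intros Hcn Hc Hbn Hb Hloc HI HIl eps Heps.
  destruct (exp_neg_small D (eps/3) ltac:(lra)) as [M [HM0 HM]].
  specialize (HM M (Rle_refl M)).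
  pose proof (exp_dominator_nonneg f D Hb) as HD.
  rewrite Rabs_right in HM by lra.
  set (delta := eps / (3 * (2 * M + 1))).
  destruct (Hloc M delta ltac:(apply Rdiv_lt_0_compat; lra)) as [N0 HN0].
  exists (max N0 N1). intros N HN. unfold R_dist.
  assert (HcN : forall x, continuous (fn N) x) by (apply Hcn; lia).
  pose proof (improper_integral_core_approx (fn N) D (I N) HcN (Hbn N ltac:(lia))
                (HI N ltac:(lia)) M HM0) as HtailN.
  pose proof (improper_integral_core_approx f D Il Hc Hb HIl M HM0) as Htail.
  assert (Hcore : Rabs (RInt (fn N) (- M) M - RInt f (- M) M) <= (M - - M) * delta).
  { rewrite <- (@RInt_minus R_CompleteNormedModule) by (apply ex_RInt_continuous_R; auto).
    apply abs_RInt_le_const; [lra| |].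
    - apply ex_RInt_continuous_R. intros x.
      apply (continuous_minus (U:=R_UniformSpace) (V:=R_NormedModule) (fn N) f x); auto.
    - intros t Ht. apply HN0; [lia|]. apply Rabs_le; lra. }
  assert (Hdelta : (M - - M) * delta <= eps / 3).
  { unfold delta.
    replace ((M - - M) * (eps / (3 * (2 * M + 1)))) with (eps / 3 * (2 * M / (2 * M + 1)))
      by (field; lra).
    assert (2 * M / (2 * M + 1) <= 1).
    { apply Rmult_le_reg_r with (2*M+1); [lra|].
      unfold Rdiv. rewrite Rmult_assoc, Rinv_l by lra. lra. }
    assert (0 <= 2 * M / (2 * M + 1)) by (apply Rdiv_le_0_compat; lra). nra. }
  apply Rabs_le_between in HtailN. apply Rabs_le_between in Htail.
  apply Rabs_le_between in Hcore. apply Rabs_def1; lra.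
Qed.

Lemma improper_integral_family (fn : nat -> R -> R) N1 :
  (forall N, (N1 <= N)%nat -> exists l, improper_integral (fn N) l) ->
  exists I : nat -> R, forall N, (N1 <= N)%nat -> improper_integral (fn N) (I N).
Proof.
  intros Hex.
  assert (Hex' : forall N, exists l, (N1 <= N)%nat -> improper_integral (fn N) l).
  { intros N. destruct (Compare_dec.le_lt_dec N1 N) as [HN|HN].
    - destruct (Hex N HN) as [l Hl]. exists l. auto.
    - exists 0. intros. lia. }
  exists (fun N => proj1_sig (constructive_indefinite_description _ (Hex' N))).
  intros N HN. destruct (constructive_indefinite_description _ _) as [l Hl]. auto.
Qed.

(** * The rescaled exponent *)

Definition quarter_root (N : nat) : R := Rpower (INR N) (1/4).

Definition alpha_c (w : nat -> nat -> R) (N : nat) : R := / sqrt (emp_mom w N 2).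

Definition scaled_exponent (w : nat -> nat -> R) (N : nat) (r z : R) : R :=
  - INR N * G w N (beta_c w N) (3 / 4) (z / quarter_root N) r.

Lemma quarter_root_facts N : (1 <= N)%nat ->
  0 < quarter_root N /\ 1 <= quarter_root N /\ quarter_root N ^ 4 = INR N /\
  Rpower (INR N) (3/4) = quarter_root N ^ 3.
Proof.
  intros HN. pose proof (INR_pos N HN). unfold quarter_root.
  assert (Hp : forall k : nat, Rpower (INR N) (1/4) ^ k = Rpower (INR N) (1/4 * INR k)).
  { intros k. rewrite <- Rpower_pow by (unfold Rpower; apply exp_pos). apply Rpower_mult. }
  split; [unfold Rpower; apply exp_pos|split; [|split]].
  - unfold Rpower. apply Rle_trans with (exp 0); [rewrite exp_0; lra|]. apply exp_monotone.
    assert (0 <= ln (INR N)) by (rewrite <- ln_1; apply ln_le; [lra|apply (le_INR 1); auto]).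
    lra.
  - rewrite Hp. replace (1/4 * INR 4) with 1 by (simpl; field). apply Rpower_1; auto.
  - rewrite Hp. f_equal. simpl. field.
Qed.

Lemma alpha_beta_c w N : (forall i, (i < N)%nat -> 0 < w N i) -> (1 <= N)%nat ->
  alpha w N (beta_c w N) = alpha_c w N.
Proof.
  intros Hp HN. pose proof (emp_mom_pos w N 1 Hp HN). pose proof (emp_mom_pos w N 2 Hp HN).
  unfold alpha, alpha_c, beta_c, nu. rewrite sinh_arcsinh.
  replace (/ (emp_mom w N 2 / emp_mom w N 1) / emp_mom w N 1) with (/ emp_mom w N 2)
    by (field; lra).
  apply sqrt_inv.
Qed.

Lemma alpha_c_facts w N : (forall i, (i < N)%nat -> 0 < w N i) -> (1 <= N)%nat ->
  0 < alpha_c w N /\ alpha_c w N ^ 2 * emp_mom w N 2 = 1 /\ alpha_c w N * emp_mom w N 1 <= 1.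
Proof.
  intros Hp HN. unfold alpha_c.
  pose proof (emp_mom_pos w N 2 Hp HN). pose proof (emp_mom_pos w N 1 Hp HN).
  pose proof (sqrt_lt_R0 _ H). pose proof (sqrt_sqrt (emp_mom w N 2) ltac:(lra)).
  split; [apply Rinv_0_lt_compat; auto|split].
  - rewrite <- H2 at 2. field. lra.
  - pose proof (emp_mom1_sq_le w N HN).
    assert (emp_mom w N 1 <= sqrt (emp_mom w N 2)).
    { rewrite <- (sqrt_pow2 (emp_mom w N 1)) by lra. apply sqrt_le_1_alt. auto. }
    apply Rmult_le_reg_l with (sqrt (emp_mom w N 2)); auto.
    rewrite <- Rmult_assoc, Rinv_r by lra. lra.
Qed.

Lemma scaled_exponent_sum w N r z : (forall i, (i < N)%nat -> 0 < w N i) -> (1 <= N)%nat ->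
  scaled_exponent w N r z =
  sumN N (fun i => ln (cosh (alpha_c w N * w N i * (z / quarter_root N) + r / quarter_root N ^ 3)))
  - INR N * (z / quarter_root N) ^ 2 / 2.
Proof.
  intros Hp HN. pose proof (INR_pos N HN).
  destruct (quarter_root_facts N HN) as [HQ [_ [_ HQ3]]].
  unfold scaled_exponent, G. rewrite alpha_beta_c, HQ3 by auto. field. lra.
Qed.

Definition cross_terms (a3m3 am1 r z Q : R) : R :=
  r ^ 2 / (2 * Q ^ 2) - / 12 * (4 * a3m3 * r * z ^ 3 / Q ^ 2 + 6 * r ^ 2 * z ^ 2 / Q ^ 4
                               + 4 * am1 * r ^ 3 * z / Q ^ 6 + r ^ 4 / Q ^ 8).

Definition lncosh_rem_sum (w : nat -> nat -> R) (N : nat) (r z : R) : R :=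
  sumN N (fun i => lncosh_rem (alpha_c w N * w N i * (z / quarter_root N)
                               + r / quarter_root N ^ 3)).

(* Expanding [ln cosh] to fourth order, the quadratic terms cancel exactly because
   [alpha_c^2 E[W_N^2] = 1]: this is where criticality [beta = beta_c] enters. *)
Lemma scaled_exponent_expansion w N r z :
  (forall i, (i < N)%nat -> 0 < w N i) -> (1 <= N)%nat ->
  let a := alpha_c w N in
  scaled_exponent w N r z =
  r * z * (a * emp_mom w N 1) - / 12 * (a ^ 4 * emp_mom w N 4) * z ^ 4
  + cross_terms (a ^ 3 * emp_mom w N 3) (a * emp_mom w N 1) r z (quarter_root N)
  + lncosh_rem_sum w N r z.
Proof.
  intros Hp HN a. rewrite scaled_exponent_sum by auto.
  destruct (quarter_root_facts N HN) as [HQ [_ [HQ4 _]]].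
  destruct (alpha_c_facts w N Hp HN) as [Ha [Ham _]]. fold a in Ha, Ham |- *.
  unfold lncosh_rem_sum, cross_terms. fold a. set (Q := quarter_root N) in *.
  set (u := z / Q). set (s := r / Q ^ 3).
  assert (Hs : sumN N (fun i => ln (cosh (a * w N i * u + s))) =
     sumN N (fun i => (s^2/2 - s^4/12) + (a*u*s - 4*a*u*s^3/12) * w N i
        + (a^2*u^2/2 - 6*a^2*u^2*s^2/12) * w N i ^ 2
        + (- 4 * a^3*u^3*s/12) * w N i ^ 3 + (- a^4*u^4/12) * w N i ^ 4)
     + sumN N (fun i => lncosh_rem (a * w N i * u + s))).
  { rewrite <- sumN_plus. apply sumN_ext. intros i _. unfold lncosh_rem. field. }
  rewrite Hs, sumN_quartic.
  replace (sumN N (w N)) with (sumN N (fun i => w N i ^ 1)) by (apply sumN_ext; intros; ring).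
  rewrite !sumN_pow_emp_mom by auto.
  assert (Hm2 : emp_mom w N 2 = / a ^ 2).
  { assert (a^2 <> 0) by (apply pow_nonzero; lra).
    apply (Rmult_eq_reg_l (a^2)); auto. rewrite Ham. field. lra. }
  rewrite Hm2, <- HQ4. unfold u, s. field. lra.
Qed.

Lemma Rabs_pow_le z Z k : Rabs z <= Z -> Rabs (z ^ k) <= Z ^ k.
Proof. intros H. rewrite <- RPow_abs. apply pow_incr. split; [apply Rabs_pos|auto]. Qed.

Lemma scaled_poly_bound (t1 t2 t3 t4 b1 b2 b3 b4 q r : R) : 0 < q <= 1 ->
  Rabs t1 <= b1 -> Rabs t2 <= b2 -> Rabs t3 <= b3 -> Rabs t4 <= b4 ->
  Rabs (q * (r ^ 2 / 2 - / 12 * (t1 + t2 + t3 + t4)))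
  <= q * (r ^ 2 / 2 + / 12 * (b1 + b2 + b3 + b4)).
Proof.
  intros Hq H1 H2 H3 H4.
  rewrite Rabs_mult, (Rabs_right q) by lra. apply Rmult_le_compat_l; [lra|].
  assert (Hr2 : 0 <= r^2) by apply pow2_ge_0.
  apply Rabs_le_between in H1; apply Rabs_le_between in H2;
    apply Rabs_le_between in H3; apply Rabs_le_between in H4.
  apply Rabs_le. split; lra.
Qed.

Lemma cross_terms_bound (a3m3 am1 r z Z Q P : R) :
  0 <= a3m3 <= P -> 0 <= am1 <= 1 -> Rabs z <= Z -> 1 <= Q ->
  Rabs (cross_terms a3m3 am1 r z Q)
  <= (r ^ 2 / 2 + / 12 * (4 * P * Rabs r * Z ^ 3 + 6 * r ^ 2 * Z ^ 2 + 4 * Rabs r ^ 3 * Z + r ^ 4))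
     / Q ^ 2.
Proof.
  intros HP Ham Hz HQ. unfold cross_terms.
  set (q := / Q ^ 2).
  assert (Hq : 0 < q <= 1).
  { assert (1 <= Q^2) by (apply pow_R1_Rle; lra). unfold q. split; [apply Rinv_0_lt_compat; lra|].
    rewrite <- Rinv_1. apply Rinv_le_contravar; lra. }
  assert (HZ : 0 <= Z) by (pose proof (Rabs_pos z); lra).
  replace (r ^ 2 / (2 * Q ^ 2) - / 12 * (4 * a3m3 * r * z ^ 3 / Q ^ 2 + 6 * r ^ 2 * z ^ 2 / Q ^ 4
             + 4 * am1 * r ^ 3 * z / Q ^ 6 + r ^ 4 / Q ^ 8))
    with (q * (r ^ 2 / 2 - / 12 * (4 * a3m3 * r * z ^ 3 + 6 * r ^ 2 * z ^ 2 * q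
             + 4 * am1 * r ^ 3 * z * q ^ 2 + r ^ 4 * q ^ 3))) by (unfold q; field; lra).
  match goal with |- _ <= ?X / _ => replace (X / Q ^ 2) with (q * X) by (unfold q; field; lra) end.
  pose proof (Rabs_pow_le z Z 2 Hz). pose proof (Rabs_pow_le z Z 3 Hz).
  pose proof (Rabs_pos r). pose proof (pow2_ge_0 r). pose proof (pow4_nonneg r).
  pose proof (pow_le (Rabs r) 3 (Rabs_pos r)).
  assert (q ^ 2 <= 1) by (rewrite <- (pow1 2); apply pow_incr; lra).
  assert (q ^ 3 <= 1) by (rewrite <- (pow1 3); apply pow_incr; lra).
  pose proof (pow_le q 2 ltac:(lra)). pose proof (pow_le q 3 ltac:(lra)).
  apply scaled_poly_bound; auto; rewrite !Rabs_mult.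
  - rewrite (Rabs_right 4), (Rabs_right a3m3) by lra.
    apply Rmult_le_compat; [| |nra|auto]; try apply Rabs_pos.
    apply Rmult_le_pos; [|apply Rabs_pos]; lra.
  - rewrite (Rabs_right 6), (Rabs_right (r ^ 2)), (Rabs_right q) by lra.
    pose proof (Rabs_pos (z ^ 2)).
    apply Rle_trans with (6 * r ^ 2 * Z ^ 2 * 1); [apply Rmult_le_compat; nra|lra].
  - rewrite (Rabs_right 4), (Rabs_right am1), (Rabs_right (q ^ 2)), <- RPow_abs by lra.
    pose proof (Rabs_pos z).
    apply Rle_trans with (4 * 1 * Rabs r ^ 3 * Z * 1); [|lra].
    repeat (apply Rmult_le_compat; try nra). repeat apply Rmult_le_pos; lra.
  - rewrite (Rabs_right (r ^ 4)), (Rabs_right (q ^ 3)) by lra. nra.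
Qed.

Lemma pow4_add_le y s : (y + s) ^ 4 <= 8 * (y ^ 4 + s ^ 4).
Proof.
  assert (H1 : (y + s)^2 <= 2 * (y^2 + s^2))
    by (pose proof (Rle_0_sqr (y - s)); unfold Rsqr in *; nra).
  assert (H2 : (y^2 + s^2)^2 <= 2 * (y^4 + s^4))
    by (pose proof (Rle_0_sqr (y^2 - s^2)); unfold Rsqr in *; nra).
  assert (H3 : ((y+s)^2)^2 <= (2 * (y^2 + s^2))^2) by (apply pow_incr; split; [apply pow2_ge_0|auto]).
  replace ((y+s)^4) with (((y+s)^2)^2) by ring. nra.
Qed.

Lemma lncosh_rem_le a v z Q r K Z : 0 < a -> 0 < v -> 1 <= Q -> 0 < K -> Rabs z <= Z ->
  lncosh_rem (a * v * (z / Q) + r / Q ^ 3) <=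
   8 * (a * K * Z / Q + Rabs r / Q ^ 3) ^ 2 * ((a * v * (z / Q)) ^ 4 + (r / Q ^ 3) ^ 4)
   + 8 * ind_gt v K * (a * v * (z / Q)) ^ 4 + 8 * (r / Q ^ 3) ^ 4.
Proof.
  intros Ha Hv HQ HK Hz.
  set (y := a * v * (z / Q)). set (s := r / Q ^ 3). set (eta := a * K * Z / Q + Rabs r / Q ^ 3).
  destruct (lncosh_rem_bounds (y + s)) as [E0 [E1 E2]].
  pose proof (pow4_add_le y s).
  assert (Hy4 : 0 <= y^4) by apply pow4_nonneg.
  assert (Hs4 : 0 <= s^4) by apply pow4_nonneg.
  assert (Hx4 : 0 <= (y+s)^4) by apply pow4_nonneg.
  assert (He : 0 <= eta ^ 2) by apply pow2_ge_0.
  assert (0 <= 8 * eta ^ 2 * (y ^ 4 + s ^ 4)) by (apply Rmult_le_pos; lra).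
  unfold ind_gt. destruct (Rle_dec v K).
  - assert (Hab : Rabs (y + s) <= eta).
    { eapply Rle_trans. apply Rabs_triang. unfold eta, y, s. apply Rplus_le_compat.
      + replace (a*v*(z/Q)) with ((a*v/Q)*z) by (field; lra).
        replace (a*K*Z/Q) with ((a*K/Q)*Z) by (field; lra).
        assert (0 < a*v/Q) by (apply Rdiv_lt_0_compat; nra).
        rewrite Rabs_mult, (Rabs_right (a*v/Q)) by lra.
        apply Rmult_le_compat; try lra. apply Rabs_pos.
        unfold Rdiv. apply Rmult_le_compat_r. left; apply Rinv_0_lt_compat; lra. nra.
      + unfold Rdiv. rewrite Rabs_mult. rewrite (Rabs_right (/ Q^3)). lra.
        left; apply Rinv_0_lt_compat, pow_lt; lra. }
    assert (Hx2 : (y + s)^2 <= eta^2).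
    { rewrite <- (Rsqr_pow2 (y+s)), <- Rsqr_pow2, Rsqr_abs.
      apply Rsqr_incr_1; auto. apply Rabs_pos.
      eapply Rle_trans; [apply Rabs_pos|exact Hab]. }
    assert ((y+s)^6 <= (y+s)^4 * eta^2).
    { replace ((y+s)^6) with ((y+s)^4 * (y+s)^2) by ring. apply Rmult_le_compat_l; auto. }
    assert ((y+s)^4 * eta^2 <= 8 * (y^4 + s^4) * eta^2) by (apply Rmult_le_compat_r; lra).
    lra.
  - lra.
Qed.

Lemma alpha_c_mom1_cv w EW EW2 : 0 < EW2 ->
  Un_cv (fun N => emp_mom w N 1) EW -> Un_cv (fun N => emp_mom w N 2) EW2 ->
  Un_cv (fun N => alpha_c w N * emp_mom w N 1) (EW / sqrt EW2).
Proof.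
  intros H2 C1 C2. unfold alpha_c, Rdiv. rewrite Rmult_comm.
  apply CV_mult; auto.
  apply (continuity_seq (fun x => / sqrt x)); auto.
  apply continuity_pt_inv. apply continuity_pt_sqrt. lra.
  apply Rgt_not_eq. apply sqrt_lt_R0. auto.
Qed.

Lemma alpha_c_pow4_mom4_cv w EW2 EW4 : 0 < EW2 ->
  Un_cv (fun N => emp_mom w N 2) EW2 -> Un_cv (fun N => emp_mom w N 4) EW4 ->
  Un_cv (fun N => alpha_c w N ^ 4 * emp_mom w N 4) (EW4 / EW2 ^ 2).
Proof.
  intros H2 C2 C4. unfold alpha_c, Rdiv. rewrite Rmult_comm.
  apply CV_mult; auto.
  replace (/ EW2 ^ 2) with ((fun x => (/ sqrt x) ^ 4) EW2).
  2:{ cbv beta. pose proof (sqrt_sqrt EW2 ltac:(lra)). pose proof (sqrt_lt_R0 _ H2).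
      replace (EW2 ^ 2) with ((sqrt EW2 * sqrt EW2)^2) by (rewrite H; auto). field. lra. }
  apply (continuity_seq (fun x => (/ sqrt x) ^ 4)); auto.
  apply (continuity_pt_comp (fun x => / sqrt x) (fun y => y ^ 4)).
  apply continuity_pt_inv. apply continuity_pt_sqrt. lra.
  apply Rgt_not_eq. apply sqrt_lt_R0. auto.
  apply derivable_continuous_pt. apply derivable_pt_pow.
Qed.

Lemma sumN_scaled_pow4 w N (c : nat -> R) a z Q : (1 <= N)%nat -> 0 < Q -> Q ^ 4 = INR N ->
  sumN N (fun i => c i * (a * w N i * (z / Q)) ^ 4)
  = a ^ 4 * z ^ 4 * (/ INR N * sumN N (fun i => c i * w N i ^ 4)).
Proof.
  intros HN HQ HQ4. pose proof (INR_pos N HN). rewrite <- HQ4, <- !sumN_scal.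
  apply sumN_ext. intros. field. lra.
Qed.

Lemma sumN_affine3 N (f g : nat -> R) A B C c :
  sumN N (fun i => A * (f i + c) + B * g i + C * c)
  = A * (sumN N f + INR N * c) + B * sumN N g + C * (INR N * c).
Proof. induction N; [rewrite !sumN_0; simpl; ring|]. rewrite !sumN_S, IHN, S_INR. ring. Qed.

Lemma lncosh_rem_sum_le_raw w N r z K Z :
  (forall i, (i < N)%nat -> 0 < w N i) -> (1 <= N)%nat -> 0 < K -> Rabs z <= Z ->
  let a := alpha_c w N in let Q := quarter_root N in
  0 <= lncosh_rem_sum w N r z <=
  8 * (a * K * Z / Q + Rabs r / Q ^ 3) ^ 2 * (a ^ 4 * Z ^ 4 * emp_mom w N 4 + r ^ 4)
  + 8 * a ^ 4 * Z ^ 4 * emp_mom4_tail w N K + 8 * (r ^ 4 / Q ^ 8).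
Proof.
  intros Hpos HN HK Hz a Q. pose proof (INR_pos N HN).
  destruct (quarter_root_facts N HN) as [HQ [HQ1 [HQ4 _]]]. fold Q in HQ, HQ1, HQ4.
  destruct (alpha_c_facts w N Hpos HN) as [Ha _]. fold a in Ha.
  unfold lncosh_rem_sum. fold a Q.
  split; [apply sumN_nonneg; intros; apply lncosh_rem_bounds|].
  eapply Rle_trans; [apply sumN_le; intros i Hi; apply (lncosh_rem_le a (w N i) z Q r K Z); auto|].
  set (eta := a * K * Z / Q + Rabs r / Q ^ 3).
  assert (Hz4 : z^4 <= Z^4).
  { pose proof (Rabs_pow_le z Z 4 Hz). pose proof (Rle_abs (z^4)). lra. }
  assert (Hr4 : 0 <= r^4) by apply pow4_nonneg.
  assert (HNs4 : INR N * (r / Q^3)^4 = r^4 / Q^8) by (rewrite <- HQ4; field; lra).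
  assert (HNs4le : r^4 / Q^8 <= r^4).
  { assert (1 <= Q^8) by (apply pow_R1_Rle; lra).
    unfold Rdiv. rewrite <- (Rmult_1_r (r^4)) at 2. apply Rmult_le_compat_l; auto.
    rewrite <- Rinv_1. apply Rinv_le_contravar; lra. }
  pose proof (sumN_scaled_pow4 w N (fun _ => 1) a z Q HN HQ HQ4) as Hsy.
  pose proof (sumN_scaled_pow4 w N (fun i => ind_gt (w N i) K) a z Q HN HQ HQ4) as Hsi.
  cbv beta in Hsy, Hsi. fold (emp_mom4_tail w N K) in Hsi.
  replace (/ INR N * sumN N (fun i => 1 * w N i ^ 4)) with (emp_mom w N 4) in Hsy
    by (unfold emp_mom; f_equal; apply sumN_ext; intros; ring).
  pose proof (emp_mom4_tail_nonneg w N K Hpos HN) as HU.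
  pose proof (emp_mom_pos w N 4 Hpos HN) as Hm4.
  assert (Ha4 : 0 <= a^4) by (apply pow_le; lra).
  replace (sumN N (fun i => 8 * eta ^ 2 * ((a * w N i * (z / Q)) ^ 4 + (r / Q ^ 3) ^ 4) +
      8 * ind_gt (w N i) K * (a * w N i * (z / Q)) ^ 4 + 8 * (r / Q ^ 3) ^ 4))
   with (8 * eta ^ 2 * (sumN N (fun i => 1 * (a * w N i * (z / Q)) ^ 4) + INR N * (r / Q ^ 3) ^ 4)
      + 8 * sumN N (fun i => ind_gt (w N i) K * (a * w N i * (z / Q)) ^ 4)
      + 8 * (INR N * (r / Q ^ 3) ^ 4)).
  2:{ rewrite <- sumN_affine3. apply sumN_ext. intros. ring. }
  rewrite Hsy, Hsi, HNs4.
  assert (He : 0 <= 8 * eta^2) by (pose proof (pow2_ge_0 eta); lra).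
  assert (a ^ 4 * z ^ 4 * emp_mom w N 4 <= a^4 * Z^4 * emp_mom w N 4)
    by (apply Rmult_le_compat_r; [lra|apply Rmult_le_compat_l; auto]).
  assert (a ^ 4 * z ^ 4 * emp_mom4_tail w N K <= a^4 * Z^4 * emp_mom4_tail w N K)
    by (apply Rmult_le_compat_r; [lra|apply Rmult_le_compat_l; auto]).
  assert (8 * eta ^ 2 * (a ^ 4 * z ^ 4 * emp_mom w N 4 + r ^ 4 / Q ^ 8) <=
          8 * eta ^ 2 * (a ^ 4 * Z ^ 4 * emp_mom w N 4 + r ^ 4)) by (apply Rmult_le_compat_l; lra).
  lra.
Qed.

Lemma Rinv_pow_le_Rinv_sq Q k : 1 <= Q -> (2 <= k)%nat -> / Q ^ k <= / Q ^ 2.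
Proof.
  intros HQ Hk. apply Rinv_le_contravar; [apply pow_lt; lra|].
  replace k with (2 + (k - 2))%nat by lia. rewrite pow_add.
  assert (1 <= Q ^ (k - 2)) by (apply pow_R1_Rle; lra). assert (0 < Q^2) by (apply pow_lt; lra).
  nra.
Qed.

Lemma shift_scale_sq_le a A K Z r Q : 0 < a <= A -> 0 < K -> 0 <= Z -> 1 <= Q ->
  (a * K * Z / Q + Rabs r / Q ^ 3) ^ 2 <= (A * K * Z + Rabs r) ^ 2 / Q ^ 2.
Proof.
  intros Ha HK HZ HQ. pose proof (Rabs_pos r). pose proof (pow_lt Q 3 ltac:(lra)).
  assert (Rabs r / Q ^ 3 <= Rabs r / Q).
  { unfold Rdiv. apply Rmult_le_compat_l; [apply Rabs_pos|].
    apply Rinv_le_contravar; [lra|]. assert (1 <= Q^2) by (apply pow_R1_Rle; lra). simpl. nra. }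
  assert (a * K * Z / Q <= A * K * Z / Q).
  { unfold Rdiv. apply Rmult_le_compat_r; [left; apply Rinv_0_lt_compat; lra|].
    apply Rmult_le_compat_r; [lra|]. apply Rmult_le_compat_r; lra. }
  assert (0 <= a * K * Z / Q + Rabs r / Q ^ 3).
  { apply Rplus_le_le_0_compat; apply Rdiv_le_0_compat; try lra.
    apply Rmult_le_pos; [apply Rmult_le_pos|]; lra. }
  replace ((A * K * Z + Rabs r) ^ 2 / Q ^ 2) with (((A * K * Z + Rabs r) / Q) ^ 2)
    by (field; lra).
  apply pow_incr. unfold Rdiv in *. lra.
Qed.

Lemma lncosh_rem_sum_le w N r z K Z A M4 :
  (forall i, (i < N)%nat -> 0 < w N i) -> (1 <= N)%nat -> 0 < K -> Rabs z <= Z ->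
  alpha_c w N <= A -> emp_mom w N 4 <= M4 ->
  0 <= lncosh_rem_sum w N r z <=
  (8 * (A * K * Z + Rabs r) ^ 2 * (A ^ 4 * Z ^ 4 * M4 + r ^ 4) + 8 * r ^ 4) / quarter_root N ^ 2
  + 8 * A ^ 4 * Z ^ 4 * emp_mom4_tail w N K.
Proof.
  intros Hpos HN HK Hz HA HM4.
  destruct (lncosh_rem_sum_le_raw w N r z K Z Hpos HN HK Hz) as [H0 Hraw]. split; [auto|].
  eapply Rle_trans; [exact Hraw|]. cbv zeta.
  destruct (quarter_root_facts N HN) as [HQ [HQ1 _]]. set (Q := quarter_root N) in *.
  destruct (alpha_c_facts w N Hpos HN) as [Ha _]. set (a := alpha_c w N) in *.
  pose proof (emp_mom4_tail_nonneg w N K Hpos HN) as HU.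
  pose proof (emp_mom_pos w N 4 Hpos HN) as Hm4.
  assert (HZ : 0 <= Z) by (pose proof (Rabs_pos z); lra).
  assert (HZ4 : 0 <= Z^4) by (apply pow_le; lra).
  assert (Hr4 : 0 <= r^4) by apply pow4_nonneg.
  assert (Ha4 : a^4 <= A^4) by (apply pow_incr; lra).
  assert (0 <= a^4) by (apply pow_le; lra).
  assert (Heta2 : (a * K * Z / Q + Rabs r / Q ^ 3) ^ 2 <= (A * K * Z + Rabs r) ^ 2 / Q ^ 2)
    by (apply shift_scale_sq_le; auto; lra).
  assert (Hmom : a ^ 4 * Z ^ 4 * emp_mom w N 4 + r ^ 4 <= A ^ 4 * Z ^ 4 * M4 + r ^ 4).
  { apply Rplus_le_compat_r. apply Rmult_le_compat; try lra.
    - apply Rmult_le_pos; lra.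
    - apply Rmult_le_compat_r; lra. }
  assert (Hr8 : r ^ 4 / Q ^ 8 <= r ^ 4 / Q ^ 2).
  { unfold Rdiv. apply Rmult_le_compat_l; [auto|]. apply Rinv_pow_le_Rinv_sq; [auto|lia]. }
  assert (HUA : a ^ 4 * Z ^ 4 * emp_mom4_tail w N K <= A ^ 4 * Z ^ 4 * emp_mom4_tail w N K)
    by (apply Rmult_le_compat_r; [auto|apply Rmult_le_compat_r; lra]).
  assert (Hprod : (a * K * Z / Q + Rabs r / Q ^ 3) ^ 2 * (a ^ 4 * Z ^ 4 * emp_mom w N 4 + r ^ 4)
                  <= (A * K * Z + Rabs r) ^ 2 / Q ^ 2 * (A ^ 4 * Z ^ 4 * M4 + r ^ 4)).
  { apply Rmult_le_compat; auto; [apply pow2_ge_0|].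
    apply Rplus_le_le_0_compat; [|auto]. apply Rmult_le_pos; [apply Rmult_le_pos|]; lra. }
  replace ((8 * (A * K * Z + Rabs r) ^ 2 * (A ^ 4 * Z ^ 4 * M4 + r ^ 4) + 8 * r ^ 4) / Q ^ 2)
    with (8 * ((A * K * Z + Rabs r) ^ 2 / Q ^ 2 * (A ^ 4 * Z ^ 4 * M4 + r ^ 4)) + 8 * (r ^ 4 / Q ^ 2))
    by (field; lra).
  lra.
Qed.

Definition vanishes_uniformly_on (Z : R) (g : nat -> R -> R) : Prop :=
  forall eps, 0 < eps -> exists N0, forall N, (N0 <= N)%nat ->
    forall z, Rabs z <= Z -> Rabs (g N z) <= eps.

Lemma vanishes_uniformly_plus Z g h :
  vanishes_uniformly_on Z g -> vanishes_uniformly_on Z h ->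
  vanishes_uniformly_on Z (fun N z => g N z + h N z).
Proof.
  intros Hg Hh eps Heps.
  destruct (Hg (eps/2) ltac:(lra)) as [N1 HN1]. destruct (Hh (eps/2) ltac:(lra)) as [N2 HN2].
  exists (max N1 N2). intros N HN z Hz.
  eapply Rle_trans; [apply Rabs_triang|].
  pose proof (HN1 N ltac:(lia) z Hz). pose proof (HN2 N ltac:(lia) z Hz). lra.
Qed.

Lemma vanishes_uniformly_eventually_eq Z g h N1 :
  (forall N, (N1 <= N)%nat -> forall z, Rabs z <= Z -> g N z = h N z) ->
  vanishes_uniformly_on Z h -> vanishes_uniformly_on Z g.
Proof.
  intros Heq Hh eps Heps. destruct (Hh eps Heps) as [N0 HN0].
  exists (max N0 N1). intros N HN z Hz. rewrite Heq by (auto; lia). apply HN0; auto; lia.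
Qed.

Lemma vanishes_uniformly_of_approx Z g (u : nat -> R) : Un_cv u 0 ->
  (forall eps, 0 < eps -> exists c N1, forall N, (N1 <= N)%nat ->
     forall z, Rabs z <= Z -> Rabs (g N z) <= eps + c * Rabs (u N)) ->
  vanishes_uniformly_on Z g.
Proof.
  intros Hu Happrox eps Heps.
  destruct (Happrox (eps/2) ltac:(lra)) as [c [N1 HN1]].
  pose proof (Rabs_pos c).
  destruct (Hu (eps / 2 / (Rabs c + 1))) as [N2 HN2].
  { apply Rdiv_lt_0_compat; lra. }
  exists (max N1 N2). intros N HN z Hz.
  specialize (HN2 N ltac:(lia)). unfold R_dist in HN2. rewrite Rminus_0_r in HN2.
  pose proof (Rabs_pos (u N)).
  assert (c * Rabs (u N) <= eps / 2).
  { apply Rle_trans with (Rabs c * Rabs (u N)); [apply Rmult_le_compat_r; [lra|apply Rle_abs]|].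
    apply Rle_trans with ((Rabs c + 1) * (eps / 2 / (Rabs c + 1))); [apply Rmult_le_compat; lra|].
    right. field. lra. }
  pose proof (HN1 N ltac:(lia) z Hz). lra.
Qed.

Lemma Un_cv_sub_limit (u : nat -> R) l : Un_cv u l -> Un_cv (fun N => u N - l) 0.
Proof.
  intros Hu. replace 0 with (l - l) by ring. apply CV_minus; [auto|apply Un_cv_const].
Qed.

Lemma Rinv_quarter_root_sq_cv0 : Un_cv (fun N => / quarter_root N ^ 2) 0.
Proof.
  intros eps Heps. set (e := eps / 2). assert (He : 0 < e) by (unfold e; lra).
  destruct (nat_ge_above (Rmax 1 (/ e ^ 2))) as [N0 HN0].
  exists N0. intros N HN. unfold R_dist. rewrite Rminus_0_r.
  specialize (HN0 N ltac:(lia)). pose proof (Rmax_l 1 (/ e ^ 2)). pose proof (Rmax_r 1 (/ e ^ 2)).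
  assert (HN1 : (1 <= N)%nat) by (apply INR_le; simpl; lra).
  destruct (quarter_root_facts N HN1) as [HQ [_ [HQ4 _]]]. set (Q := quarter_root N) in *.
  assert (HQ2 : 0 < Q ^ 2) by (apply pow_lt; lra).
  rewrite Rabs_right by (left; apply Rinv_0_lt_compat; lra).
  assert (He2 : 0 < e ^ 2) by (apply pow_lt; lra).
  assert (/ e ^ 2 <= (Q ^ 2) ^ 2) by (replace ((Q ^ 2) ^ 2) with (Q ^ 4) by ring; lra).
  assert (/ e <= Q ^ 2).
  { apply Rsqr_incr_0_var; [|lra]. unfold Rsqr. rewrite <- Rinv_mult.
    replace (e * e) with (e ^ 2) by ring. simpl in *. lra. }
  assert (/ Q ^ 2 <= e).
  { rewrite <- (Rinv_inv e). apply Rinv_le_contravar; [apply Rinv_0_lt_compat|]; lra. }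
  unfold e in *. lra.
Qed.

Definition limit_exponent (EW EW2 EW4 r z : R) : R :=
  z * r * (EW / sqrt EW2) - / 12 * (EW4 / EW2 ^ 2) * z ^ 4.

Lemma limit_exponent_bounded EW EW2 EW4 r M :
  exists L, forall z, Rabs z <= M -> limit_exponent EW EW2 EW4 r z <= L.
Proof.
  exists (M * Rabs r * Rabs (EW / sqrt EW2) + / 12 * Rabs (EW4 / EW2 ^ 2) * M ^ 4).
  intros z Hz. unfold limit_exponent.
  eapply Rle_trans; [apply Rle_abs|]. eapply Rle_trans; [apply Rabs_triang|].
  rewrite Rabs_Ropp, !Rabs_mult, (Rabs_right (/12)) by lra.
  pose proof (Rabs_pow_le z M 4 Hz). pose proof (Rabs_pos r).
  pose proof (Rabs_pos (EW / sqrt EW2)). pose proof (Rabs_pos (EW4 / EW2 ^ 2)).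
  apply Rplus_le_compat.
  - apply Rmult_le_compat_r; [auto|]. apply Rmult_le_compat_r; auto.
  - apply Rmult_le_compat_l; [|auto]. apply Rmult_le_pos; lra.
Qed.

Lemma exp_sub_le x y : Rabs (exp x - exp y) <= exp (Rmax x y) * Rabs (x - y).
Proof.
  destruct (MVT_abs exp exp y x) as [c [Hc Hcr]].
  { intros c _. apply derivable_pt_lim_exp. }
  rewrite Hc, Rabs_right by (apply Rle_ge; left; apply exp_pos).
  apply Rmult_le_compat_r; [apply Rabs_pos|]. apply exp_monotone.
  unfold Rmin, Rmax in *. destruct (Rle_dec y x), (Rle_dec x y); lra.
Qed.

Section ScaledExponentLimit.

Variables (w : nat -> nat -> R) (EW EW2 EW4 r : R).
Hypothesis Hpos : forall N i, (i < N)%nat -> 0 < w N i.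
Hypothesis HEW2 : 0 < EW2.
Hypothesis Hcv1 : Un_cv (fun N => emp_mom w N 1) EW.
Hypothesis Hcv2 : Un_cv (fun N => emp_mom w N 2) EW2.
Hypothesis Hcv4 : Un_cv (fun N => emp_mom w N 4) EW4.
Hypothesis Htail : forall eps, 0 < eps -> exists K, 0 < K /\
  exists N0, forall N, (N0 <= N)%nat -> (1 <= N)%nat -> emp_mom4_tail w N K <= eps.

Let A := / sqrt (EW2 / 2).

Lemma coefficients_eventually_bounded : exists N0, forall N, (N0 <= N)%nat ->
  (1 <= N)%nat /\ alpha_c w N <= A /\ emp_mom w N 4 <= EW4 + 1 /\
  0 <= alpha_c w N ^ 3 * emp_mom w N 3 <= A ^ 3 * (EW2 + EW4 + 2).
Proof.
  destruct (Hcv2 (Rmin (EW2 / 2) 1) ltac:(apply Rmin_pos; lra)) as [N2 HN2].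
  destruct (Hcv4 1 ltac:(lra)) as [N4 HN4].
  pose proof (Rmin_l (EW2 / 2) 1). pose proof (Rmin_r (EW2 / 2) 1).
  exists (max 1 (max N2 N4)). intros N HN. assert (HN1 : (1 <= N)%nat) by lia.
  specialize (HN2 N ltac:(lia)). specialize (HN4 N ltac:(lia)).
  unfold R_dist in HN2, HN4. apply Rabs_def2 in HN2. apply Rabs_def2 in HN4.
  destruct (alpha_c_facts w N (Hpos N) HN1) as [Ha _].
  pose proof (emp_mom_pos w N 3 (Hpos N) HN1). pose proof (emp_mom3_le w N (Hpos N) HN1).
  assert (Haa : alpha_c w N <= A).
  { unfold alpha_c, A. apply Rinv_le_contravar; [apply sqrt_lt_R0; lra|].
    apply sqrt_le_1_alt. lra. }
  split; [auto|split; [auto|split; [lra|split]]].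
  - apply Rmult_le_pos; [apply pow_le|]; lra.
  - apply Rmult_le_compat; [apply pow_le; lra|lra|apply pow_incr; lra|lra].
Qed.

Lemma linear_term_vanishes Z :
  vanishes_uniformly_on Z (fun N z => r * z * (alpha_c w N * emp_mom w N 1 - EW / sqrt EW2)).
Proof.
  apply (vanishes_uniformly_of_approx Z _
           (fun N => alpha_c w N * emp_mom w N 1 - EW / sqrt EW2)).
  { apply Un_cv_sub_limit, alpha_c_mom1_cv; auto. }
  intros eps Heps. exists (Rabs r * Z), 0%nat. intros N _ z Hz.
  rewrite !Rabs_mult. pose proof (Rabs_pos r). pose proof (Rabs_pos z).
  pose proof (Rabs_pos (alpha_c w N * emp_mom w N 1 - EW / sqrt EW2)).
  assert (Rabs r * Rabs z <= Rabs r * Z) by (apply Rmult_le_compat_l; lra). nra.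
Qed.

Lemma quartic_term_vanishes Z :
  vanishes_uniformly_on Z
    (fun N z => - (/ 12 * (alpha_c w N ^ 4 * emp_mom w N 4 - EW4 / EW2 ^ 2) * z ^ 4)).
Proof.
  apply (vanishes_uniformly_of_approx Z _
           (fun N => alpha_c w N ^ 4 * emp_mom w N 4 - EW4 / EW2 ^ 2)).
  { apply Un_cv_sub_limit, alpha_c_pow4_mom4_cv; auto. }
  intros eps Heps. exists (/ 12 * Z ^ 4), 0%nat. intros N _ z Hz.
  rewrite Rabs_Ropp, !Rabs_mult, (Rabs_right (/ 12)) by lra.
  pose proof (Rabs_pow_le z Z 4 Hz).
  pose proof (Rabs_pos (alpha_c w N ^ 4 * emp_mom w N 4 - EW4 / EW2 ^ 2)). nra.
Qed.

Lemma cross_terms_vanish Z :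
  vanishes_uniformly_on Z (fun N z => cross_terms (alpha_c w N ^ 3 * emp_mom w N 3)
                                        (alpha_c w N * emp_mom w N 1) r z (quarter_root N)).
Proof.
  apply (vanishes_uniformly_of_approx Z _ (fun N => / quarter_root N ^ 2)
           Rinv_quarter_root_sq_cv0).
  intros eps Heps. destruct coefficients_eventually_bounded as [N0 HN0].
  set (P := A ^ 3 * (EW2 + EW4 + 2)).
  exists (r ^ 2 / 2
          + / 12 * (4 * P * Rabs r * Z ^ 3 + 6 * r ^ 2 * Z ^ 2 + 4 * Rabs r ^ 3 * Z + r ^ 4)).
  exists N0. intros N HN z Hz.
  destruct (HN0 N HN) as [HN1 [_ [_ HP]]].
  destruct (quarter_root_facts N HN1) as [HQ [HQ1 _]].
  destruct (alpha_c_facts w N (Hpos N) HN1) as [Ha [_ Ham1]].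
  pose proof (emp_mom_pos w N 1 (Hpos N) HN1).
  rewrite (Rabs_right (/ _)) by (left; apply Rinv_0_lt_compat, pow_lt; lra).
  assert (Ham : 0 <= alpha_c w N * emp_mom w N 1 <= 1) by (split; [apply Rmult_le_pos|]; lra).
  pose proof (cross_terms_bound _ _ r z Z (quarter_root N) P HP Ham Hz HQ1) as Hb.
  unfold Rdiv in Hb. lra.
Qed.

Lemma lncosh_rem_sum_vanishes Z : vanishes_uniformly_on Z (fun N z => lncosh_rem_sum w N r z).
Proof.
  apply (vanishes_uniformly_of_approx Z _ (fun N => / quarter_root N ^ 2)
           Rinv_quarter_root_sq_cv0).
  intros eps Heps. destruct coefficients_eventually_bounded as [N0 HN0].
  assert (HA : 0 <= A ^ 4 * Z ^ 4).
  { apply Rmult_le_pos; [apply pow_le; left; apply Rinv_0_lt_compat, sqrt_lt_R0; lra|].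
    apply pow4_nonneg. }
  destruct (Htail (eps / (8 * A ^ 4 * Z ^ 4 + 1))) as [K [HK [NU HNU]]].
  { apply Rdiv_lt_0_compat; lra. }
  exists (8 * (A * K * Z + Rabs r) ^ 2 * (A ^ 4 * Z ^ 4 * (EW4 + 1) + r ^ 4) + 8 * r ^ 4).
  exists (max N0 NU). intros N HN z Hz.
  destruct (HN0 N ltac:(lia)) as [HN1 [Haa [Hm4 _]]].
  specialize (HNU N ltac:(lia) HN1).
  destruct (lncosh_rem_sum_le w N r z K Z A (EW4 + 1) (Hpos N) HN1 HK Hz Haa Hm4) as [H0 Hle].
  rewrite Rabs_right by lra.
  rewrite (Rabs_right (/ _)) by (left; apply Rinv_0_lt_compat, pow_lt;
                                 apply (quarter_root_facts N HN1)).
  assert (8 * A ^ 4 * Z ^ 4 * emp_mom4_tail w N K <= eps).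
  { apply Rle_trans with (8 * (A ^ 4 * Z ^ 4) * (eps / (8 * A ^ 4 * Z ^ 4 + 1))).
    - rewrite <- Rmult_assoc. apply Rmult_le_compat_l; [lra|auto].
    - replace (8 * (A ^ 4 * Z ^ 4) * (eps / (8 * A ^ 4 * Z ^ 4 + 1)))
        with (eps * (8 * A ^ 4 * Z ^ 4 / (8 * A ^ 4 * Z ^ 4 + 1))) by (field; lra).
      assert (8 * A ^ 4 * Z ^ 4 / (8 * A ^ 4 * Z ^ 4 + 1) <= 1).
      { apply Rmult_le_reg_r with (8 * A ^ 4 * Z ^ 4 + 1); [lra|].
        unfold Rdiv. rewrite Rmult_assoc, Rinv_l by lra. lra. }
      nra. }
  unfold Rdiv in Hle. lra.
Qed.

Lemma scaled_exponent_vanishes Z :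
  vanishes_uniformly_on Z (fun N z => scaled_exponent w N r z - limit_exponent EW EW2 EW4 r z).
Proof.
  apply (vanishes_uniformly_eventually_eq Z _
    (fun N z => r * z * (alpha_c w N * emp_mom w N 1 - EW / sqrt EW2)
       + - (/ 12 * (alpha_c w N ^ 4 * emp_mom w N 4 - EW4 / EW2 ^ 2) * z ^ 4)
       + cross_terms (alpha_c w N ^ 3 * emp_mom w N 3) (alpha_c w N * emp_mom w N 1) r z
                     (quarter_root N)
       + lncosh_rem_sum w N r z) 1%nat).
  - intros N HN z _. rewrite scaled_exponent_expansion by auto.
    unfold limit_exponent. ring.
  - exact (vanishes_uniformly_plus _ _ _
             (vanishes_uniformly_plus _ _ _
                (vanishes_uniformly_plus _ _ _ (linear_term_vanishes Z) (quartic_term_vanishes Z))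
                (cross_terms_vanish Z))
             (lncosh_rem_sum_vanishes Z)).
Qed.

Lemma exp_scaled_exponent_cv_locally_uniformly :
  cv_locally_uniformly (fun N z => exp (scaled_exponent w N r z))
                       (fun z => exp (limit_exponent EW EW2 EW4 r z)).
Proof.
  intros M eps Heps.
  destruct (limit_exponent_bounded EW EW2 EW4 r M) as [L HL].
  set (delta := Rmin 1 (eps / exp (L + 1))).
  assert (Hd : 0 < delta) by (apply Rmin_pos; [lra|apply Rdiv_lt_0_compat; [lra|apply exp_pos]]).
  assert (Hd1 : delta <= 1) by apply Rmin_l.
  assert (Hd2 : delta <= eps / exp (L + 1)) by apply Rmin_r.
  destruct (scaled_exponent_vanishes M delta Hd) as [N0 HN0].
  exists N0. intros N HN x Hx.
  specialize (HN0 N HN x Hx). specialize (HL x Hx). apply Rabs_le_between in HN0.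
  eapply Rle_trans; [apply exp_sub_le|].
  apply Rle_trans with (exp (L + 1) * delta).
  - apply Rmult_le_compat; [left; apply exp_pos|apply Rabs_pos| |apply Rabs_le; lra].
    apply exp_monotone. apply Rmax_lub; lra.
  - apply Rle_trans with (exp (L + 1) * (eps / exp (L + 1))).
    + apply Rmult_le_compat_l; [left; apply exp_pos|auto].
    + right. field. apply Rgt_not_eq, exp_pos.
Qed.

End ScaledExponentLimit.

(** * Domination of the integrands *)

Lemma min_quartic_sq_nonneg u : 0 <= min_quartic_sq u.
Proof.
  unfold min_quartic_sq. pose proof (pow2_ge_0 u).
  assert (0 <= u^4) by apply pow4_nonneg.
  unfold Rmin. destruct (Rle_dec _ _); lra.
Qed.

Lemma min_quartic_sq_monotone u v : u ^ 2 <= v ^ 2 -> min_quartic_sq u <= min_quartic_sq v.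
Proof.
  intros H. unfold min_quartic_sq. pose proof (pow2_ge_0 u).
  assert (u^4 <= v^4).
  { replace (u^4) with ((u^2)^2) by ring. replace (v^4) with ((v^2)^2) by ring.
    apply pow_incr; lra. }
  unfold Rmin. destruct (Rle_dec (u^4) (u^2)), (Rle_dec (v^4) (v^2)); lra.
Qed.

Lemma min_quartic_sq_scale_le k u : 1 <= k -> min_quartic_sq u <= k ^ 4 * min_quartic_sq (u / k).
Proof.
  intros Hk. unfold min_quartic_sq. rewrite Rmult_min_distr_l by (apply pow_le; lra).
  replace (k ^ 4 * (u / k) ^ 4) with (u ^ 4) by (field; lra).
  replace (k ^ 4 * (u / k) ^ 2) with (k ^ 2 * u ^ 2) by (field; lra).
  assert (1 <= k ^ 2) by (apply pow_R1_Rle; lra). pose proof (pow2_ge_0 u).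
  unfold Rmin. destruct (Rle_dec (u^4) (u^2)), (Rle_dec (u^4) (k^2 * u^2)); nra.
Qed.

(* Completing the square in the quadratic regime of [min_quartic_sq]. *)
Lemma exp_min_quartic_sq_le A B c k z : 0 <= B -> 0 < c -> 0 < k ->
  exp (A + B * Rabs z - c * min_quartic_sq (k * z)) <=
  exp (A + (B + 1) / k + (B + 1) ^ 2 / (4 * c * k ^ 2)) * exp (- Rabs z).
Proof.
  intros HB Hc Hk. rewrite <- exp_plus. apply exp_monotone.
  set (t := Rabs z). assert (Ht : 0 <= t) by apply Rabs_pos.
  assert (Hz : min_quartic_sq (k * z) = min_quartic_sq (k * t)).
  { apply Rle_antisym; apply min_quartic_sq_monotone; unfold t;
      rewrite !Rpow_mult_distr, pow2_abs; lra. }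
  rewrite Hz. unfold min_quartic_sq.
  assert (Hk2 : 0 < k ^ 2) by (apply pow_lt; lra).
  assert (H1 : 0 <= (B + 1) / k) by (apply Rdiv_le_0_compat; lra).
  assert (H2 : 0 <= (B + 1) ^ 2 / (4 * c * k ^ 2))
    by (apply Rdiv_le_0_compat; [apply pow2_ge_0|nra]).
  destruct (Rle_dec (k * t) 1).
  - pose proof (min_quartic_sq_nonneg (k * t)). unfold min_quartic_sq in *.
    assert (t <= 1 / k) by (apply Rmult_le_reg_l with k; [lra|]; field_simplify; lra).
    assert ((B + 1) * t <= (B + 1) / k).
    { replace ((B+1)/k) with ((B+1) * (1/k)) by (field; lra). apply Rmult_le_compat_l; lra. }
    assert (0 <= c * Rmin ((k * t) ^ 4) ((k * t) ^ 2)) by (apply Rmult_le_pos; lra).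
    lra.
  - rewrite Rmin_right.
    2:{ replace ((k*t)^4) with ((k*t)^2 * (k*t)^2) by ring.
        assert (1 <= (k*t)^2) by (apply pow_R1_Rle; lra). nra. }
    assert (0 <= c * k^2 * (t - (B + 1) / (2 * c * k ^ 2)) ^ 2)
      by (apply Rmult_le_pos; [nra|apply pow2_ge_0]).
    assert (c * k ^ 2 * (t - (B + 1) / (2 * c * k ^ 2)) ^ 2
            = c * (k * t) ^ 2 - (B + 1) * t + (B + 1) ^ 2 / (4 * c * k ^ 2)) by (field; lra).
    lra.
Qed.

Lemma shift_terms_sum_le w N r z : (forall i, (i < N)%nat -> 0 < w N i) -> (1 <= N)%nat ->
  let Q := quarter_root N in
  Rabs (r / Q ^ 3) * sumN N (fun i => Rabs (alpha_c w N * w N i * (z / Q)))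
  + INR N * (r / Q ^ 3) ^ 2 <= Rabs r * Rabs z + r ^ 2.
Proof.
  intros Hp HN Q.
  destruct (quarter_root_facts N HN) as [HQ [HQ1 [HQ4 _]]]. fold Q in HQ, HQ1, HQ4.
  destruct (alpha_c_facts w N Hp HN) as [Ha [_ Ham1]]. set (a := alpha_c w N) in *.
  assert (0 < / Q) by (apply Rinv_0_lt_compat; lra).
  replace (sumN N (fun i => Rabs (a * w N i * (z / Q))))
    with (a * Rabs z / Q * sumN N (fun i => w N i ^ 1)).
  2:{ rewrite <- sumN_scal. apply sumN_ext. intros i Hi. pose proof (Hp i Hi).
      unfold Rdiv. rewrite !Rabs_mult, (Rabs_right a), (Rabs_right (w N i)), (Rabs_right (/ Q))
        by lra. ring. }
  rewrite sumN_pow_emp_mom by auto. unfold Rdiv.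
  rewrite Rabs_mult, (Rabs_right (/ Q^3)) by (left; apply Rinv_0_lt_compat, pow_lt; lra).
  rewrite <- HQ4.
  replace (Rabs r * / Q ^ 3 * (a * Rabs z * / Q * (Q ^ 4 * emp_mom w N 1)))
    with (Rabs r * Rabs z * (a * emp_mom w N 1)) by (field; lra).
  replace (Q ^ 4 * (r * / Q ^ 3) ^ 2) with (r ^ 2 * / Q ^ 2) by (field; lra).
  assert (1 <= Q^2) by (apply pow_R1_Rle; lra). pose proof (pow2_ge_0 r).
  assert (r ^ 2 * / Q ^ 2 <= r ^ 2).
  { rewrite <- (Rmult_1_r (r^2)) at 2. apply Rmult_le_compat_l; auto.
    rewrite <- Rinv_1. apply Rinv_le_contravar; lra. }
  pose proof (Rabs_pos r). pose proof (Rabs_pos z). pose proof (emp_mom_pos w N 1 Hp HN).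
  assert (0 <= Rabs r * Rabs z) by nra. nra.
Qed.

Lemma scaled_exponent_le w N r z : (forall i, (i < N)%nat -> 0 < w N i) -> (1 <= N)%nat ->
  scaled_exponent w N r z <= r ^ 2 + Rabs r * Rabs z
    - / 20 * sumN N (fun i => min_quartic_sq (alpha_c w N * w N i * (z / quarter_root N))).
Proof.
  intros Hp HN. pose proof (INR_pos N HN).
  pose proof (shift_terms_sum_le w N r z Hp HN) as Hshift. cbv zeta in Hshift.
  destruct (alpha_c_facts w N Hp HN) as [_ [Ha2 _]].
  rewrite scaled_exponent_sum by auto.
  set (Q := quarter_root N) in *. set (a := alpha_c w N) in *.
  set (s := r / Q ^ 3) in *. set (y := fun i => a * w N i * (z / Q)).
  assert (Hpt : forall i, (i < N)%nat -> ln (cosh (y i + s)) <=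
     / 2 * y i ^ 2 + - / 20 * min_quartic_sq (y i) + Rabs s * Rabs (y i) + s ^ 2).
  { intros i Hi. pose proof (lncosh_add_le (y i) s). pose proof (lncosh_le_sq_sub_min (y i)).
    assert (s * tanh (y i) <= Rabs s * Rabs (y i)).
    { eapply Rle_trans; [apply Rle_abs|]. rewrite Rabs_mult.
      apply Rmult_le_compat_l; [apply Rabs_pos|apply Rabs_tanh_le]. }
    lra. }
  eapply Rle_trans; [apply Rplus_le_compat_r, sumN_le; exact Hpt|].
  rewrite !sumN_plus, !sumN_scal, sumN_const.
  assert (Hy2 : sumN N (fun i => y i ^ 2) = INR N * (z / Q) ^ 2).
  { unfold y. transitivity (a^2 * (z/Q)^2 * sumN N (fun i => w N i ^ 2)).
    - rewrite <- sumN_scal. apply sumN_ext. intros. ring.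
    - rewrite sumN_pow_emp_mom by auto.
      replace (a ^ 2 * (z / Q) ^ 2 * (INR N * emp_mom w N 2))
        with ((a^2 * emp_mom w N 2) * INR N * (z/Q)^2) by ring. rewrite Ha2. ring. }
  rewrite Hy2. unfold y in *. lra.
Qed.

Lemma scaled_exponent_le_uniform w N r z c p a0 :
  (forall i, (i < N)%nat -> 0 < w N i) -> (1 <= N)%nat ->
  0 < c -> 0 < a0 -> a0 <= alpha_c w N -> 0 <= p -> p <= 1 - emp_cdf w N c ->
  scaled_exponent w N r z <= r ^ 2 + Rabs r * Rabs z - p / 20 * min_quartic_sq (a0 * c * z).
Proof.
  intros Hp HN Hc Ha0 Ha0a Hp0 Hpc.
  pose proof (scaled_exponent_le w N r z Hp HN) as HU.
  destruct (quarter_root_facts N HN) as [HQ [HQ1 [HQ4 _]]].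
  set (Q := quarter_root N) in *. set (a := alpha_c w N) in *.
  pose proof (INR_pos N HN).
  set (v := a * c * z / Q).
  assert (Hsum : sumN N (fun i => ind_gt (w N i) c) * min_quartic_sq v <=
                 sumN N (fun i => min_quartic_sq (a * w N i * (z / Q)))).
  { rewrite Rmult_comm, <- sumN_scal. apply sumN_le. intros i Hi. pose proof (Hp i Hi).
    unfold ind_gt. destruct (Rle_dec (w N i) c).
    - rewrite Rmult_0_r. apply min_quartic_sq_nonneg.
    - rewrite Rmult_1_r. apply min_quartic_sq_monotone. unfold v.
      replace ((a * c * z / Q) ^ 2) with ((a / Q)^2 * z^2 * c^2) by (field; lra).
      replace ((a * w N i * (z / Q)) ^ 2) with ((a / Q)^2 * z^2 * (w N i)^2) by (field; lra).
      apply Rmult_le_compat_l; [apply Rmult_le_pos; apply pow2_ge_0|apply pow_incr; lra]. }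
  replace (sumN N (fun i => ind_gt (w N i) c)) with (INR N * (1 - emp_cdf w N c)) in Hsum
    by (rewrite one_sub_emp_cdf by auto; field; lra).
  assert (Hmin : min_quartic_sq (a0 * c * z) <= INR N * min_quartic_sq v).
  { apply Rle_trans with (min_quartic_sq (a * c * z)).
    - apply min_quartic_sq_monotone. rewrite !Rpow_mult_distr.
      apply Rmult_le_compat_r; [apply pow2_ge_0|].
      apply Rmult_le_compat_r; [apply pow2_ge_0|apply pow_incr; lra].
    - rewrite <- HQ4. apply min_quartic_sq_scale_le. auto. }
  pose proof (min_quartic_sq_nonneg (a0 * c * z)). pose proof (min_quartic_sq_nonneg v).
  assert (p * min_quartic_sq (a0 * c * z)
          <= sumN N (fun i => min_quartic_sq (a * w N i * (z / Q)))).
  { eapply Rle_trans; [|exact Hsum].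
    apply Rle_trans with (p * (INR N * min_quartic_sq v)); [apply Rmult_le_compat_l; lra|].
    replace (INR N * (1 - emp_cdf w N c) * min_quartic_sq v)
      with ((1 - emp_cdf w N c) * (INR N * min_quartic_sq v)) by ring.
    apply Rmult_le_compat_r; [|auto]. apply Rmult_le_pos; lra. }
  unfold Rdiv. lra.
Qed.

Lemma scaled_exponent_le_single w N r z : (forall i, (i < N)%nat -> 0 < w N i) -> (1 <= N)%nat ->
  scaled_exponent w N r z <= r ^ 2 + Rabs r * Rabs z
    - / 20 * min_quartic_sq (alpha_c w N * w N 0%nat / quarter_root N * z).
Proof.
  intros Hp HN. pose proof (scaled_exponent_le w N r z Hp HN).
  replace (alpha_c w N * w N 0%nat / quarter_root N * z)
    with (alpha_c w N * w N 0%nat * (z / quarter_root N)) by (unfold Rdiv; ring).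
  pose proof (sumN_ge_term N (fun i => min_quartic_sq (alpha_c w N * w N i * (z / quarter_root N)))
                0%nat ltac:(lia) (fun i _ => min_quartic_sq_nonneg _)).
  lra.
Qed.

Lemma ex_derive_sumN N (g : nat -> R -> R) x : (forall i, ex_derive (g i) x) ->
  ex_derive (fun z => sumN N (fun i => g i z)) x.
Proof.
  intros H. induction N.
  - apply (ex_derive_ext (fun _ => 0)); [intros; rewrite sumN_0; auto|apply ex_derive_const].
  - apply (ex_derive_ext (fun z => sumN N (fun i => g i z) + g N z));
      [intros; rewrite sumN_S; auto|].
    apply (ex_derive_plus (fun z => sumN N (fun i => g i z)) (g N)); auto.
Qed.

Lemma continuous_exp_scaled_exponent w N r x :
  (forall i, (i < N)%nat -> 0 < w N i) -> (1 <= N)%nat ->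
  continuous (fun z => exp (scaled_exponent w N r z)) x.
Proof.
  intros Hp HN.
  set (Q := quarter_root N). set (a := alpha_c w N).
  set (S := fun z => sumN N (fun i => ln (cosh (a * w N i * (z / Q) + r / Q ^ 3)))).
  apply (continuous_ext (fun z => exp (S z - INR N * (z / Q) ^ 2 / 2))).
  { intros z. rewrite scaled_exponent_sum by auto. reflexivity. }
  apply (ex_derive_continuous (fun z => exp (S z - INR N * (z / Q) ^ 2 / 2))).
  destruct (ex_derive_sumN N (fun i z => ln (cosh (a * w N i * (z / Q) + r / Q ^ 3))) x) as [d Hd].
  { intros i. eexists.
    apply (is_derive_comp (fun y => ln (cosh y)) (fun z => a * w N i * (z / Q) + r / Q ^ 3)).
    - apply is_derive_lncosh.
    - auto_derive; auto. }
  eexists. apply (is_derive_comp exp (fun z => S z - INR N * (z / Q) ^ 2 / 2)).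
  - apply is_derive_exp.
  - apply (is_derive_minus S (fun z => INR N * (z / Q) ^ 2 / 2)); [exact Hd|].
    auto_derive; auto.
Qed.

Lemma exp_scaled_exponent_integrable w r :
  (forall N i, (i < N)%nat -> 0 < w N i) ->
  forall N, (1 <= N)%nat -> exists l, improper_integral (fun z => exp (scaled_exponent w N r z)) l.
Proof.
  intros Hpos N HN.
  set (k := alpha_c w N * w N 0%nat / quarter_root N).
  assert (Hk : 0 < k).
  { destruct (quarter_root_facts N HN) as [HQ _].
    destruct (alpha_c_facts w N (Hpos N) HN) as [Ha _].
    pose proof (Hpos N 0%nat ltac:(lia)). unfold k.
    apply Rdiv_lt_0_compat; [apply Rmult_lt_0_compat|]; auto. }
  set (D := exp (r ^ 2 + (Rabs r + 1) / k + (Rabs r + 1) ^ 2 / (4 * / 20 * k ^ 2))).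
  destruct (improper_integral_exp_dominated (fun z => exp (scaled_exponent w N r z)) D)
    as [l [Hl _]].
  - intros x. apply continuous_exp_scaled_exponent; auto.
  - intros x. split; [left; apply exp_pos|].
    eapply Rle_trans; [apply exp_monotone, (scaled_exponent_le_single w N r x (Hpos N) HN)|].
    apply (exp_min_quartic_sq_le (r ^ 2) (Rabs r) (/ 20) k x); [apply Rabs_pos|lra|auto].
  - exists l. exact Hl.
Qed.

(* A fixed fraction [p] of the weights exceeds [c], which gives a quartic or quadratic
   decay of the exponent that is uniform in [N]. *)
Lemma exp_scaled_exponent_dominated w r EW2 c p N0 :
  (forall N i, (i < N)%nat -> 0 < w N i) -> 0 < EW2 -> Un_cv (fun N => emp_mom w N 2) EW2 ->
  0 < c -> 0 < p -> (forall N, (N0 <= N)%nat -> p <= 1 - emp_cdf w N c) ->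
  exists D N1, forall N, (N1 <= N)%nat -> exp_dominated (fun z => exp (scaled_exponent w N r z)) D.
Proof.
  intros Hpos HEW2 Hcv2 Hc Hp HNp.
  destruct (Hcv2 1 ltac:(lra)) as [Nb HNb].
  set (a0 := / sqrt (EW2 + 1)).
  assert (Ha0 : 0 < a0) by (apply Rinv_0_lt_compat, sqrt_lt_R0; lra).
  set (k := a0 * c). assert (Hk : 0 < k) by (unfold k; nra).
  exists (exp (r ^ 2 + (Rabs r + 1) / k + (Rabs r + 1) ^ 2 / (4 * (p / 20) * k ^ 2))).
  exists (max 1 (max N0 Nb)). intros N HN x. split; [left; apply exp_pos|].
  assert (HN1 : (1 <= N)%nat) by lia.
  assert (Ha0a : a0 <= alpha_c w N).
  { specialize (HNb N ltac:(lia)). unfold R_dist in HNb. apply Rabs_def2 in HNb.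
    pose proof (emp_mom_pos w N 2 (Hpos N) HN1).
    unfold a0, alpha_c. apply Rinv_le_contravar; [apply sqrt_lt_R0; lra|].
    apply sqrt_le_1_alt. lra. }
  eapply Rle_trans.
  { apply exp_monotone.
    apply (scaled_exponent_le_uniform w N r x c p a0 (Hpos N) HN1 Hc Ha0 Ha0a); [lra|].
    apply HNp. lia. }
  apply (exp_min_quartic_sq_le (r ^ 2) (Rabs r) (p / 20) k x); [apply Rabs_pos|lra|auto].
Qed.

Lemma emp_mom2_limit_pos w EW EW2 :
  Un_cv (fun N => emp_mom w N 1) EW -> Un_cv (fun N => emp_mom w N 2) EW2 -> 0 < EW ->
  0 < EW2.
Proof.
  intros Hcv1 Hcv2 HEW.
  assert (EW ^ 2 - EW2 <= 0).
  { apply (Un_cv_le_eventually (fun N => emp_mom w N 1 ^ 2 - emp_mom w N 2) _ 0 1).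
    - apply CV_minus; [|auto].
      apply (Un_cv_ext (fun N => emp_mom w N 1 * emp_mom w N 1)); [intros; simpl; ring|].
      replace (EW ^ 2) with (EW * EW) by ring. apply CV_mult; auto.
    - intros n Hn. pose proof (emp_mom1_sq_le w n Hn). lra. }
  pose proof (pow_lt EW 2 HEW). lra.
Qed.

Lemma continuous_exp_limit_exponent EW EW2 EW4 r x :
  continuous (fun z => exp (limit_exponent EW EW2 EW4 r z)) x.
Proof.
  apply (ex_derive_continuous (fun z => exp (limit_exponent EW EW2 EW4 r z))).
  unfold limit_exponent. auto_derive. auto.
Qed.

Theorem mainTheorem11
  (w : nat -> nat -> R) (F : R -> R) (EW EW2 EW4 : R)
  (Hpos : forall N i, (i < N)%nat -> 0 < w N i)
  (HF : is_cdf F)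
  (Hdist : forall x, continuity_pt F x -> Un_cv (fun N => emp_cdf w N x) (F x))
  (HEW : moment_cdf F 1 EW) (HEWpos : 0 < EW)
  (HEW2 : moment_cdf F 2 EW2) (Hcv2 : Un_cv (fun N => emp_mom w N 2) EW2)
  (HEW4 : moment_cdf F 4 EW4) (Hcv4 : Un_cv (fun N => emp_mom w N 4) EW4)
  (r : R) :
  exists (I : nat -> R) (Ilim : R),
    (forall N : nat, (1 <= N)%nat ->
       improper_integral
         (fun z => exp (- INR N *
            G w N (beta_c w N) (3 / 4) (z / Rpower (INR N) (1 / 4)) r))
         (I N)) /\
    improper_integral
      (fun z => exp (z * r * (EW / sqrt EW2) - / 12 * (EW4 / EW2 ^ 2) * z ^ 4))
      Ilim /\
    Un_cv I Ilim.
Proof.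
  pose proof (emp_mom1_cv w F EW EW4 Hpos HF Hdist HEW HEW4 Hcv4) as Hcv1.
  pose proof (emp_mom4_tail_small w F EW4 Hpos HF Hdist HEW4 Hcv4) as Htail.
  pose proof (emp_mom2_limit_pos w EW EW2 Hcv1 Hcv2 HEWpos) as HEW2pos.
  destruct (emp_cdf_mass_above w F EW Hpos HF Hdist HEW HEWpos) as [c [p [Hc [Hp [Np HNp]]]]].
  destruct (exp_scaled_exponent_dominated w r EW2 c p Np Hpos HEW2pos Hcv2 Hc Hp HNp)
    as [D [N1 Hdom]].
  pose proof (exp_scaled_exponent_cv_locally_uniformly w EW EW2 EW4 r
                Hpos HEW2pos Hcv1 Hcv2 Hcv4 Htail) as Hloc.
  destruct (improper_integral_family (fun N z => exp (scaled_exponent w N r z)) 1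
              (exp_scaled_exponent_integrable w r Hpos)) as [I HI].
  pose proof (exp_dominated_limit _ _ D N1 Hloc Hdom) as Hlim_dom.
  destruct (improper_integral_exp_dominated _ D (continuous_exp_limit_exponent EW EW2 EW4 r)
              Hlim_dom) as [Ilim [HIlim _]].
  exists I, Ilim. split; [exact HI|]. split; [exact HIlim|].
  apply (improper_integral_dominated_cv (fun N z => exp (scaled_exponent w N r z))
           (fun z => exp (limit_exponent EW EW2 EW4 r z)) D (max 1 N1)); auto.
  - intros N HN x. apply continuous_exp_scaled_exponent; auto. lia.
  - apply continuous_exp_limit_exponent.
  - intros N HN. apply Hdom. lia.
  - intros N HN. apply HI. lia.
Qed.
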